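(* Let $S_\psi\subset\mathbb{R}^3$ be the surface of revolution parametrized by $(r,\theta)\mapsto(\psi(r)\cos\theta,\psi(r)\sin\theta,\chi(r))$, $(r,\theta)\in[r_1,r_2]\times[0,2\pi)$, and let $\Omega=\{(\psi(r)\cos\theta,\psi(r)\sin\theta,\chi(r)) : r\in[0,a],\ \theta\in(0,2\pi]\}$ with $r_1\le0<a\le r_2$. Let $f\in C^1(\mathbb{R})$, $\alpha\in\mathbb{R}$, and let $v=v(r)$ be a radial stationary solution of $$\Delta v+f(v)=0\text{ in }\Omega,\qquad\frac{\partial v}{\partial\nu}+\alpha v=0\text{ on }\partial\Omega.$$ If $$-\Big(\frac{\psi'}{\psi}\Big)'=-\frac{\psi''}{\psi}+\Big(\frac{\psi'}{\psi}\Big)^2\geq0\quad\text{in }(0,a)$$ and $$L_a\big[H_a\alpha^2v(a)^2+\alpha v(a)f(v(a))+\alpha^3v(a)^2\big]+L_0\big[H_0\alpha^2v(0)^2+\alpha v(0)f(v(0))+\alpha^3v(0)^2\big]<0,$$ where $L_0=2\pi\psi(0)$, $L_a=2\pi\psi(a)$, $H_a=-\frac{\psi'(a)}{\psi(a)}$, $H_0=\frac{\psi'(0)}{\psi(0)}$, then $v$ is unstable.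
   Context: Here $r\mapsto(\psi(r),\chi(r))$ is a simple regular plane curve, $\psi\in C^2$, $\psi>0$ on $[r_1,r_2]$, $(\psi')^2+(\chi')^2=1$, and $\chi'(0)>0$, $\chi'(a)>0$. $S_\psi$ carries the metric $dr^2+\psi(r)^2d\theta^2$, with Laplace–Beltrami operator $\Delta u=u_{rr}+\frac{\psi'}{\psi}u_r+\frac1{\psi^2}u_{\theta\theta}$; $\partial\Omega$ consists of the circles $r=0$ and $r=a$ with outer unit normal $\nu=-\partial_r$ on $r=0$ and $\nu=\partial_r$ on $r=a$. A solution is unstable if the smallest eigenvalue $\lambda_1$ of $\Delta\phi+f'(v)\phi+\lambda\phi=0$ in $\Omega$, $\partial_\nu\phi+\alpha\phi=0$ on $\partial\Omega$ is negative. *)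

From Stdlib Require Import Reals Lra.
From Coquelicot Require Import Coquelicot.
Open Scope R_scope.

(* Functions on the parameter strip are u : R -> R -> R, u r theta,
   with coordinates (r, theta); periodicity 2*PI in theta encodes the
   angular variable of the surface of revolution. *)

Definition d_r (u : R -> R -> R) (r th : R) : R := Derive (fun s => u s th) r.
Definition d_th (u : R -> R -> R) (r th : R) : R := Derive (fun t => u r t) th.

Definition C2_strip (a : R) (u : R -> R -> R) : Prop :=
  (forall r th,
     ex_derive (fun s => u s th) r /\ ex_derive (fun t => u r t) th /\
     ex_derive (fun s => d_r u s th) r /\ ex_derive (fun t => d_r u r t) th /\
     ex_derive (fun s => d_th u s th) r /\ ex_derive (fun t => d_th u r t) th) /\
  (forall r th, 0 <= r <= a ->
     continuous (fun p : R * R => u (fst p) (snd p)) (r, th) /\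
     continuous (fun p : R * R => d_r u (fst p) (snd p)) (r, th) /\
     continuous (fun p : R * R => d_th u (fst p) (snd p)) (r, th) /\
     continuous (fun p : R * R => d_r (d_r u) (fst p) (snd p)) (r, th) /\
     continuous (fun p : R * R => d_th (d_r u) (fst p) (snd p)) (r, th) /\
     continuous (fun p : R * R => d_r (d_th u) (fst p) (snd p)) (r, th) /\
     continuous (fun p : R * R => d_th (d_th u) (fst p) (snd p)) (r, th)).

(* Laplace-Beltrami operator of the metric dr^2 + psi(r)^2 dtheta^2 *)
Definition LB (psi : R -> R) (u : R -> R -> R) (r th : R) : R :=
  d_r (d_r u) r th + Derive psi r / psi r * d_r u r th
  + / (psi r ^ 2) * d_th (d_th u) r th.

(* lam is an eigenvalue of  Delta phi + q(r) phi + lam phi = 0 in Omega,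
   d_nu phi + alpha phi = 0 on dOmega (nu = -d_r at r=0, nu = d_r at r=a),
   with a classical (C^2 up to the boundary), nonzero eigenfunction. *)
Definition is_eigenvalue (psi : R -> R) (a alpha : R) (q : R -> R) (lam : R) : Prop :=
  exists phi : R -> R -> R,
    C2_strip a phi /\
    (forall r th, phi r (th + 2 * PI) = phi r th) /\
    (exists r th, 0 <= r <= a /\ phi r th <> 0) /\
    (forall r th, 0 < r < a ->
       LB psi phi r th + q r * phi r th + lam * phi r th = 0) /\
    (forall th, - d_r phi 0 th + alpha * phi 0 th = 0) /\
    (forall th, d_r phi a th + alpha * phi a th = 0).

Definition lambda1 (psi : R -> R) (a alpha : R) (q : R -> R) : Rbar :=
  Glb_Rbar (is_eigenvalue psi a alpha q).

(* v is unstable: the smallest eigenvalue of the linearized problem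
   Delta phi + f'(v) phi + lam phi = 0 with the Robin condition is negative *)
Definition unstable (psi : R -> R) (a alpha : R) (f v : R -> R) : Prop :=
  Rbar_lt (lambda1 psi a alpha (fun r => Derive f (v r))) (Finite 0).

(* For each lam, shoot the radial problem y'' + (psi'/psi) y' + (f'(v) + lam) y = 0 from
   y(0) = 1, y'(0) = alpha, which satisfies the Robin condition at r = 0.  For very negative
   lam the solution stays positive and the Robin defect y'(a) + alpha y(a) is positive.
   Differentiating the equation of v shows that v' solves the linearized equation up to a
   term controlled by the sign of -(psi'/psi)'; a Picone identity comparing v' with y then
   shows that, as long as y > 0 on [0, a], the defect at some negative lam0 has the sign of
   the boundary quantity of the hypothesis, hence is negative.  At the first lam where
   "y > 0 and positive defect" fails, y is still positive, so the defect vanishes: y is a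
   radial eigenfunction with negative eigenvalue. *)

From Stdlib Require Import Reals Lra Lia Classical FunctionalExtensionality IndefiniteDescription.
From Coquelicot Require Import Coquelicot.
Open Scope R_scope.

Ltac solve_continuous :=
  repeat match goal with
  | |- continuous (fun _ => ?c) _ => apply continuous_const
  | |- continuous (fun x => x) _ => apply (continuous_id (U := R_UniformSpace))
  | |- continuous (fun _ => _ - _) _ => apply (continuous_minus (V := R_NormedModule))
  | |- continuous (fun _ => _ + _) _ => apply (continuous_plus (V := R_NormedModule))
  | |- continuous (fun _ => - _) _ => apply (continuous_opp (V := R_NormedModule))
  | |- continuous (fun _ => _ * _) _ => apply (continuous_mult (K := R_AbsRing))
  | |- continuous (fun _ => Rabs _) _ => apply continuous_Rabs_comp
  | |- continuous Rabs _ => apply continuous_Rabs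
  | |- continuous (fun y => ?f y) ?x => change (continuous f x)
  | H : forall x, continuous ?f x |- continuous ?f _ => apply H
  | H : continuous ?f ?x |- continuous ?f ?x => exact H
  end.

Lemma is_derive_continuous (f : R -> R) x l : is_derive f x l -> continuous f x.
Proof. intros H. apply (ex_derive_continuous (V := R_NormedModule)). now exists l. Qed.

Lemma Rmin_eq_abs (x y : R) : Rmin x y = (x + y - Rabs (x - y)) * / 2.
Proof.
  unfold Rmin. destruct (Rle_dec x y).
  - rewrite Rabs_left1 by lra. field.
  - rewrite Rabs_pos_eq by lra. field.
Qed.

Lemma continuous_Rmin (f g : R -> R) x :
  continuous f x -> continuous g x -> continuous (fun s => Rmin (f s) (g s)) x.
Proof.
  intros Hf Hg.
  apply (continuous_ext (fun s => (f s + g s - Rabs (f s - g s)) * / 2)).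
  - intros s. symmetry. apply Rmin_eq_abs.
  - solve_continuous.
Qed.

Lemma continuous_ball (h : R -> R) r eps : continuous h r -> 0 < eps ->
  exists d, 0 < d /\ forall x, Rabs (x - r) < d -> Rabs (h x - h r) < eps.
Proof.
  intros Hc He. apply continuity_pt_filterlim in Hc.
  destruct (Hc eps He) as [d [Hd Hx]]. exists d. split; auto.
  intros x Hxr. destruct (Req_dec x r) as [->|Hne].
  - rewrite Rminus_eq_0, Rabs_R0; auto.
  - apply (Hx x). repeat split; auto.
Qed.

Lemma continuous_of_ball (f : R -> R) x :
  (forall eps, 0 < eps ->
     exists d, 0 < d /\ forall s, Rabs (s - x) < d -> Rabs (f s - f x) < eps) ->
  continuous f x.
Proof.
  intros H. apply continuity_pt_filterlim. intros eps He.
  destruct (H eps He) as [d [Hd Hs]]. exists d. split; auto.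
  intros s [_ Hsx]. now apply Hs.
Qed.

Lemma Rabs_lt_all_eq_0 (x : R) : (forall eps, 0 < eps -> Rabs x < eps) -> x = 0.
Proof.
  intros H. destruct (Req_dec x 0) as [|Hx]; auto.
  specialize (H (Rabs x) (Rabs_pos_lt x Hx)). lra.
Qed.

Lemma continuous_eq_of_frequently_eq (F1 F2 : R -> R) x0 :
  continuous F1 x0 -> continuous F2 x0 ->
  (forall d, 0 < d -> exists t, Rabs (t - x0) < d /\ F1 t = F2 t) -> F1 x0 = F2 x0.
Proof.
  intros H1 H2 H. enough (F1 x0 - F2 x0 = 0) by lra.
  apply Rabs_lt_all_eq_0. intros eps He.
  destruct (continuous_ball F1 x0 (eps / 2) H1) as [d1 [Hd1 Hx1]]; [lra|].
  destruct (continuous_ball F2 x0 (eps / 2) H2) as [d2 [Hd2 Hx2]]; [lra|].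
  destruct (H (Rmin d1 d2)) as [t [Ht Heq]]; [now apply Rmin_glb_lt|].
  specialize (Hx1 t (Rlt_le_trans _ _ _ Ht (Rmin_l _ _))).
  specialize (Hx2 t (Rlt_le_trans _ _ _ Ht (Rmin_r _ _))).
  rewrite Heq in Hx1.
  replace (F1 x0 - F2 x0) with (- (F2 t - F1 x0) + (F2 t - F2 x0)) by ring.
  eapply Rle_lt_trans; [apply Rabs_triang|]. rewrite Rabs_Ropp. lra.
Qed.

Lemma increment_le_of_derive_le (f df : R -> R) a b K : a <= b ->
  (forall x, a < x < b -> is_derive f x (df x)) ->
  (forall x, a < x < b -> df x <= K) ->
  (forall x, a <= x <= b -> continuous f x) -> f b - f a <= K * (b - a).
Proof.
  intros Hab Hd Hk Hc. destruct (Req_dec a b) as [->|Hne]; [lra|].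
  assert (prf : forall c, a < c < b -> derivable_pt f c).
  { intros c Hc'. apply ex_derive_Reals_0. exists (df c). now apply Hd. }
  assert (prid : forall c, a < c < b -> derivable_pt id c)
    by (intros; apply derivable_pt_id).
  destruct (MVT f id a b prf prid) as [c [Hcab Hmvt]]; [lra| | |].
  - intros x Hx. now apply continuity_pt_filterlim, Hc.
  - intros x _. apply derivable_continuous_pt, derivable_pt_id.
  - replace (derive_pt id c (prid c Hcab)) with 1 in Hmvt
      by (symmetry; apply derive_pt_eq_0, derivable_pt_lim_id).
    replace (derive_pt f c (prf c Hcab)) with (df c) in Hmvt
      by (symmetry; apply derive_pt_eq_0, is_derive_Reals, Hd, Hcab).
    unfold id in Hmvt. specialize (Hk c Hcab). nra.
Qed.

Lemma increment_ge_of_derive_ge (f df : R -> R) a b K : a <= b ->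
  (forall x, a < x < b -> is_derive f x (df x)) ->
  (forall x, a < x < b -> K <= df x) ->
  (forall x, a <= x <= b -> continuous f x) -> K * (b - a) <= f b - f a.
Proof.
  intros Hab Hd Hk Hc.
  enough (- f b - - f a <= - K * (b - a)) by lra.
  apply (increment_le_of_derive_le (fun x => - f x) (fun x => - df x)); auto.
  - intros x Hx. now apply (is_derive_opp f), Hd.
  - intros x Hx. specialize (Hk x Hx). lra.
  - intros x Hx. now apply (continuous_opp (V := R_NormedModule) f), Hc.
Qed.

Lemma derive_le_0_of_left_min (f : R -> R) x l d : 0 < d -> is_derive f x l ->
  (forall h, - d < h < 0 -> f x <= f (x + h)) -> l <= 0.
Proof.
  intros Hd Hf Hm. apply is_derive_Reals in Hf.
  destruct (Rle_or_lt l 0) as [|Hl]; auto. exfalso.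
  destruct (Hf l Hl) as [del Hdel].
  assert (Hm0 : 0 < Rmin d del) by (apply Rmin_glb_lt; [lra | apply cond_pos]).
  pose proof (Rmin_l d del). pose proof (Rmin_r d del).
  set (h := - Rmin d del / 2).
  specialize (Hdel h ltac:(unfold h; lra) ltac:(unfold h; rewrite Rabs_left; lra)).
  specialize (Hm h ltac:(unfold h; lra)).
  assert ((f (x + h) - f x) / h <= 0).
  { unfold Rdiv. assert (/ h < 0) by (apply Rinv_lt_0_compat; unfold h; lra). nra. }
  rewrite Rabs_left1 in Hdel by lra. lra.
Qed.

Lemma derive_ge_0_of_right_min (f : R -> R) x l d : 0 < d -> is_derive f x l ->
  (forall h, 0 < h < d -> f x <= f (x + h)) -> 0 <= l.
Proof.
  intros Hd Hf Hm. apply is_derive_Reals in Hf.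
  destruct (Rle_or_lt 0 l) as [|Hl]; auto. exfalso.
  destruct (Hf (- l) ltac:(lra)) as [del Hdel].
  assert (Hm0 : 0 < Rmin d del) by (apply Rmin_glb_lt; [lra | apply cond_pos]).
  pose proof (Rmin_l d del). pose proof (Rmin_r d del).
  set (h := Rmin d del / 2).
  specialize (Hdel h ltac:(unfold h; lra) ltac:(unfold h; rewrite Rabs_pos_eq; lra)).
  specialize (Hm h ltac:(unfold h; lra)).
  assert (0 <= (f (x + h) - f x) / h).
  { unfold Rdiv. assert (0 < / h) by (apply Rinv_0_lt_compat; unfold h; lra). nra. }
  rewrite Rabs_pos_eq in Hdel by lra. lra.
Qed.

Lemma continuous_ge_0_of_frequently (h : R -> R) x : continuous h x ->
  (forall d, 0 < d -> exists mu, Rabs (mu - x) < d /\ 0 <= h mu) -> 0 <= h x.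
Proof.
  intros Hc Hfreq. destruct (Rle_or_lt 0 (h x)) as [|Hneg]; auto. exfalso.
  destruct (continuous_ball h x (- h x) Hc ltac:(lra)) as [d [Hd Hball]].
  destruct (Hfreq d Hd) as [mu [Hmu Hpos]].
  specialize (Hball mu Hmu). apply Rabs_lt_between in Hball. lra.
Qed.

Lemma first_failure (good : R -> Prop) lo hi : lo <= hi -> good lo -> ~ good hi ->
  exists lp, lo <= lp <= hi /\
    (forall mu, lo <= mu < lp -> good mu) /\
    (forall d, 0 < d -> exists mu, lp - d < mu <= lp /\ lo <= mu /\ good mu) /\
    (forall d, 0 < d -> exists mu, lp <= mu < lp + d /\ mu <= hi /\ ~ good mu).
Proof.
  intros Hlohi Hlo Hhi.
  set (T := fun l => lo <= l <= hi /\ forall mu, lo <= mu <= l -> good mu).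
  assert (HT_lo : T lo) by (split; [lra | intros mu Hmu; now replace mu with lo by lra]).
  destruct (completeness T) as [lp [Hub Hlub]].
  { exists hi. intros x [Hx _]. lra. }
  { now exists lo. }
  assert (Hlp_lo : lo <= lp) by now apply Hub.
  assert (Hlp_hi : lp <= hi) by (apply Hlub; intros x [Hx _]; lra).
  assert (Hbelow : forall mu, lo <= mu < lp -> good mu).
  { intros mu Hmu. apply NNPP. intros Hbad.
    enough (lp <= mu) by lra.
    apply Hlub. intros e [He Hgood]. apply Rnot_lt_le. intros Hlt.
    apply Hbad, Hgood. lra. }
  exists lp. repeat split; auto.
  - intros d Hd. destruct (Req_dec lp lo) as [->|Hne].
    + exists lo. repeat split; auto; lra.
    + exists (Rmax lo (lp - d / 2)).
      pose proof (Rmax_l lo (lp - d / 2)). pose proof (Rmax_r lo (lp - d / 2)).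
      assert (Rmax lo (lp - d / 2) < lp) by (apply Rmax_lub_lt; lra).
      repeat split; try lra. apply Hbelow. lra.
  - intros d Hd. apply NNPP. intros Hnone.
    assert (Habove : forall mu, lp <= mu < lp + d -> mu <= hi -> good mu).
    { intros mu Hmu Hmu_hi. apply NNPP. intros Hbad. apply Hnone. now exists mu. }
    destruct (Rle_or_lt (lp + d / 2) hi) as [Hle|Hgt].
    + enough (lp + d / 2 <= lp) by lra.
      apply Hub. split; [lra|]. intros mu Hmu.
      destruct (Rlt_or_le mu lp); [apply Hbelow | apply Habove]; lra.
    + apply Hhi, Habove; lra.
Qed.

Lemma first_zero (h : R -> R) x0 : 0 <= x0 ->
  (forall x, 0 <= x <= x0 -> continuous h x) -> 0 < h 0 -> h x0 <= 0 ->
  exists r, 0 < r <= x0 /\ h r = 0 /\ forall x, 0 <= x < r -> 0 < h x.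
Proof.
  intros Hx0 Hc H0 Hx0n.
  destruct (first_failure (fun x => 0 < h x) 0 x0) as [r [Hr [Hbelow [Happ_lo Happ_hi]]]];
    auto; [lra|].
  assert (Hhr_ge : 0 <= h r).
  { apply (continuous_ge_0_of_frequently h r (Hc r Hr)). intros d Hd.
    destruct (Happ_lo d Hd) as [mu [Hmu [_ Hpos]]].
    exists mu. split; [apply Rabs_lt_between; lra | lra]. }
  assert (Hhr_le : 0 <= - h r).
  { apply (continuous_ge_0_of_frequently (fun x => - h x) r).
    { apply (continuous_opp (V := R_NormedModule)), Hc, Hr. }
    intros d Hd. destruct (Happ_hi d Hd) as [mu [Hmu [_ Hneg]]].
    exists mu. split; [apply Rabs_lt_between; lra | lra]. }
  assert (Hhr : h r = 0) by lra.
  exists r. repeat split; auto; try lra.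
  destruct (Req_dec r 0) as [->|]; lra.
Qed.

Lemma abs_le_sqrt_mul_abs (z d C : R) : 0 <= C -> z ^ 2 <= C * d ^ 2 ->
  Rabs z <= sqrt C * Rabs d.
Proof.
  intros HC Hz. rewrite <- sqrt_Rsqr_abs, <- (sqrt_Rsqr (Rabs d)) by apply Rabs_pos.
  rewrite <- sqrt_mult_alt by exact HC. apply sqrt_le_1_alt.
  rewrite <- Rsqr_abs, !Rsqr_pow2. exact Hz.
Qed.

Lemma exp_le_compat x y : x <= y -> exp x <= exp y.
Proof. intros [H | ->]; [left; now apply exp_increasing | right; reflexivity]. Qed.

Lemma continuous_of_lipschitz_near (f : R -> R) x L d : 0 < d ->
  (forall mu, Rabs (mu - x) < d -> Rabs (f mu - f x) <= L * Rabs (mu - x)) ->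
  continuous f x.
Proof.
  intros Hd Hlip. apply continuous_of_ball. intros eps He.
  exists (Rmin d (eps / (Rabs L + 1))).
  assert (HL : 0 < Rabs L + 1) by (pose proof (Rabs_pos L); lra).
  split; [apply Rmin_glb_lt; [lra | apply Rdiv_lt_0_compat; lra]|].
  intros s Hs.
  pose proof (Rlt_le_trans _ _ _ Hs (Rmin_l _ _)) as Hsd.
  pose proof (Rlt_le_trans _ _ _ Hs (Rmin_r _ _)) as Hse.
  eapply Rle_lt_trans; [apply (Hlip s Hsd)|].
  apply Rle_lt_trans with ((Rabs L + 1) * Rabs (s - x)).
  - pose proof (Rle_abs L). pose proof (Rabs_pos (s - x)). nra.
  - apply (Rmult_lt_compat_l (Rabs L + 1)) in Hse; auto.
    replace ((Rabs L + 1) * (eps / (Rabs L + 1))) with eps in Hse by (field; lra). exact Hse.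
Qed.

Lemma ex_RInt_continuous_R (f : R -> R) a b :
  (forall z, Rmin a b <= z <= Rmax a b -> continuous f z) -> ex_RInt f a b.
Proof. apply (ex_RInt_continuous (V := R_CompleteNormedModule)). Qed.

Lemma RInt_minus_continuous (f g : R -> R) a b :
  (forall x, continuous f x) -> (forall x, continuous g x) ->
  RInt f a b - RInt g a b = RInt (fun s => f s - g s) a b.
Proof.
  intros Hf Hg. symmetry.
  apply (RInt_minus (V := R_CompleteNormedModule)); apply ex_RInt_continuous_R; auto.
Qed.

Lemma is_derive_plus_RInt_0 (g : R -> R) c r : (forall x, continuous g x) ->
  is_derive (fun b => c + RInt g 0 b) r (g r).
Proof.
  intros Hg.
  assert (HI : is_derive (fun b => RInt g 0 b) r (g r)).
  { apply (is_derive_RInt g _ 0 r); auto.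
    apply filter_forall. intros b.
    apply (RInt_correct (V := R_CompleteNormedModule)), ex_RInt_continuous_R. auto. }
  pose proof (is_derive_plus _ _ r _ _ (is_derive_const c r) HI) as H.
  unfold plus in H; simpl in H. now rewrite Rplus_0_l in H.
Qed.

Lemma RInt_monomial (B : R) (k : nat) a b :
  RInt (fun s => B * s ^ k) a b = B * b ^ S k / INR (S k) - B * a ^ S k / INR (S k).
Proof.
  assert (HSk : 0 < INR (S k)) by (apply lt_0_INR; lia).
  apply (is_RInt_unique (V := R_CompleteNormedModule)).
  apply (is_RInt_derive (fun s => B * s ^ S k / INR (S k))).
  - intros x _. auto_derive; [easy|].
    change (match k with 0%nat => 1 | S _ => INR k + 1 end) with (INR (S k)). field. lra.
  - intros x _. apply (ex_derive_continuous (V := R_NormedModule)). auto_derive. easy.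
Qed.

Lemma abs_RInt_0_le_pow_nonneg (f : R -> R) (r B : R) (k : nat) : 0 <= r ->
  (forall s, continuous f s) ->
  (forall s, 0 <= s <= r -> Rabs (f s) <= B * s ^ k) ->
  Rabs (RInt f 0 r) <= B * r ^ (S k) / INR (S k).
Proof.
  intros Hr Hc Hb.
  assert (Hf : ex_RInt f 0 r) by (apply ex_RInt_continuous_R; auto).
  assert (Habs : ex_RInt (fun s => Rabs (f s)) 0 r)
    by (apply ex_RInt_continuous_R; intros; now apply continuous_Rabs_comp).
  assert (Hmon : ex_RInt (fun s => B * s ^ k) 0 r).
  { apply ex_RInt_continuous_R. intros.
    apply (ex_derive_continuous (V := R_NormedModule)). auto_derive. easy. }
  eapply Rle_trans; [apply abs_RInt_le; [lra | exact Hf]|].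
  replace (B * r ^ S k / INR (S k)) with (RInt (fun s => B * s ^ k) 0 r)
    by (rewrite RInt_monomial, pow_i, Rmult_0_r, Rdiv_0_l by lia; apply Rminus_0_r).
  apply RInt_le; [lra | exact Habs | exact Hmon |].
  intros x Hx. apply Hb. lra.
Qed.

Lemma abs_RInt_0_le_pow (f : R -> R) (r B : R) (k : nat) :
  (forall s, continuous f s) ->
  (forall s, Rmin 0 r <= s <= Rmax 0 r -> Rabs (f s) <= B * Rabs s ^ k) ->
  Rabs (RInt f 0 r) <= B * Rabs r ^ (S k) / INR (S k).
Proof.
  intros Hc Hb.
  destruct (Rle_or_lt 0 r) as [Hr|Hr].
  - rewrite Rmin_left, Rmax_right in Hb by lra. rewrite (Rabs_pos_eq r) by lra.
    apply abs_RInt_0_le_pow_nonneg; auto.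
    intros s Hs. rewrite <- (Rabs_pos_eq s) at 2 by lra. apply Hb. lra.
  - rewrite Rmin_right, Rmax_left in Hb by lra. rewrite (Rabs_left r) by lra.
    replace (RInt f 0 r) with (RInt (fun s => - f (- s)) 0 (- r)).
    2:{ apply (is_RInt_unique (V := R_CompleteNormedModule)).
        apply (is_RInt_comp_opp (V := R_NormedModule)).
        rewrite Ropp_0, Ropp_involutive.
        apply (RInt_correct (V := R_CompleteNormedModule)), ex_RInt_continuous_R. auto. }
    apply abs_RInt_0_le_pow_nonneg; [lra | |].
    + intros s. apply (continuous_opp (V := R_NormedModule)).
      apply (continuous_comp Ropp f); [apply (continuous_opp (V := R_NormedModule)), continuous_id | auto].
    + intros s Hs. rewrite Rabs_Ropp.
      replace (s ^ k) with (Rabs (- s) ^ k) by (now rewrite Rabs_Ropp, Rabs_pos_eq by lra).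
      apply Hb. lra.
Qed.

(** * Linear ODEs with bounded coefficients *)

Definition loc_unif_cvg (Fn : nat -> R -> R) (F : R -> R) : Prop :=
  forall B eps, 0 < eps -> exists N, forall n r, (N <= n)%nat -> Rabs r <= B ->
    Rabs (F r - Fn n r) < eps.

Lemma continuous_of_loc_unif_cvg (Fn : nat -> R -> R) (F : R -> R) :
  (forall n x, continuous (Fn n) x) -> loc_unif_cvg Fn F -> forall x, continuous F x.
Proof.
  intros Hc Hcvg x. apply continuous_of_ball. intros eps He.
  destruct (Hcvg (Rabs x + 1) (eps / 3)) as [N HN]; [lra|].
  destruct (continuous_ball (Fn N) x (eps / 3) (Hc N x)) as [d [Hd Hdx]]; [lra|].
  exists (Rmin d 1). split; [apply Rmin_glb_lt; lra|].
  intros s Hsx.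
  pose proof (Rlt_le_trans _ _ _ Hsx (Rmin_l d 1)) as Hsd.
  pose proof (Rlt_le_trans _ _ _ Hsx (Rmin_r d 1)) as Hs1.
  assert (Hs : Rabs s <= Rabs x + 1).
  { replace s with ((s - x) + x) by ring. pose proof (Rabs_triang (s - x) x). lra. }
  pose proof (HN N s (le_n _) Hs). pose proof (HN N x (le_n _) ltac:(lra)).
  pose proof (Hdx s Hsd).
  replace (F s - F x) with ((F s - Fn N s) + (Fn N s - Fn N x) - (F x - Fn N x)) by ring.
  pose proof (Rabs_triang ((F s - Fn N s) + (Fn N s - Fn N x)) (- (F x - Fn N x))).
  pose proof (Rabs_triang (F s - Fn N s) (Fn N s - Fn N x)).
  rewrite Rabs_Ropp in *. unfold Rminus at 1. lra.
Qed.

Lemma loc_unif_cvg_lincomb (P Q : R -> R) K (yn un : nat -> R -> R) (y u : R -> R) :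
  (forall x, Rabs (P x) <= K) -> (forall x, Rabs (Q x) <= K) ->
  loc_unif_cvg yn y -> loc_unif_cvg un u ->
  loc_unif_cvg (fun n s => - P s * un n s - Q s * yn n s) (fun s => - P s * u s - Q s * y s).
Proof.
  intros HP HQ Hy Hu B eps He.
  assert (HK : 0 <= K) by (pose proof (HP 0); pose proof (Rabs_pos (P 0)); lra).
  destruct (Hy B (eps / (2 * K + 1))) as [N1 HN1]; [apply Rdiv_lt_0_compat; lra|].
  destruct (Hu B (eps / (2 * K + 1))) as [N2 HN2]; [apply Rdiv_lt_0_compat; lra|].
  exists (max N1 N2). intros n r Hn Hr.
  specialize (HN1 n r ltac:(lia) Hr). specialize (HN2 n r ltac:(lia) Hr).
  replace (- P r * u r - Q r * y r - (- P r * un n r - Q r * yn n r))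
    with (- (P r * (u r - un n r)) - Q r * (y r - yn n r)) by ring.
  unfold Rminus at 1. eapply Rle_lt_trans; [apply Rabs_triang|].
  rewrite !Rabs_Ropp, !Rabs_mult.
  pose proof (HP r). pose proof (HQ r).
  pose proof (Rabs_pos (u r - un n r)). pose proof (Rabs_pos (y r - yn n r)).
  assert (Heps : eps / (2 * K + 1) * (2 * K + 1) = eps) by (field; lra).
  assert (Rabs (P r) * Rabs (u r - un n r) <= K * (eps / (2 * K + 1))) by
    (apply Rmult_le_compat; auto using Rabs_pos; lra).
  assert (Rabs (Q r) * Rabs (y r - yn n r) <= K * (eps / (2 * K + 1))) by
    (apply Rmult_le_compat; auto using Rabs_pos; lra).
  nra.
Qed.

Lemma RInt_eq_of_loc_unif_cvg (F G : R -> R) (Fn Gn : nat -> R -> R) (c : R) :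
  (forall n r, Fn (S n) r = c + RInt (Gn n) 0 r) ->
  (forall n x, continuous (Gn n) x) -> (forall x, continuous G x) ->
  loc_unif_cvg Fn F -> loc_unif_cvg Gn G -> forall r, F r = c + RInt G 0 r.
Proof.
  intros HF HGn HG HcF HcG r.
  enough (F r - c - RInt G 0 r = 0) by lra.
  apply Rabs_lt_all_eq_0. intros eps He.
  destruct (HcF (Rabs r) (eps / 2)) as [N1 HN1]; [lra|].
  destruct (HcG (Rabs r) (eps / (2 * (Rabs r + 1)))) as [N2 HN2].
  { pose proof (Rabs_pos r). apply Rdiv_lt_0_compat; lra. }
  set (n := max N1 N2).
  assert (H1 : Rabs (F r - Fn (S n) r) < eps / 2) by (apply HN1; [unfold n; lia | lra]).
  assert (H2 : Rabs (RInt (fun s => Gn n s - G s) 0 r)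
               <= eps / (2 * (Rabs r + 1)) * Rabs r ^ 1 / INR 1).
  { apply abs_RInt_0_le_pow; [intros; solve_continuous; auto|].
    intros s Hs. rewrite pow_O, Rmult_1_r, Rabs_minus_sym. left. apply HN2; [unfold n; lia|].
    apply Rabs_le. destruct (Rle_or_lt 0 r).
    - rewrite Rmin_left, Rmax_right in Hs by lra. rewrite Rabs_pos_eq; lra.
    - rewrite Rmin_right, Rmax_left in Hs by lra. rewrite Rabs_left; lra. }
  rewrite <- RInt_minus_continuous in H2 by auto.
  assert (H3 : eps / (2 * (Rabs r + 1)) * Rabs r ^ 1 / INR 1 <= eps / 2).
  { simpl. pose proof (Rabs_pos r).
    replace (eps / (2 * (Rabs r + 1)) * (Rabs r * 1) / 1) with (eps / 2 * (Rabs r / (Rabs r + 1)))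
      by (field; lra).
    assert (Rabs r / (Rabs r + 1) <= 1)
      by (apply (Rmult_le_reg_r (Rabs r + 1)); [lra | unfold Rdiv; rewrite Rmult_assoc, Rinv_l; lra]).
    assert (0 <= Rabs r / (Rabs r + 1)) by (apply Rdiv_le_0_compat; lra). nra. }
  rewrite HF in H1.
  replace (F r - c - RInt G 0 r)
    with ((F r - (c + RInt (Gn n) 0 r)) + (RInt (Gn n) 0 r - RInt G 0 r)) by ring.
  eapply Rle_lt_trans; [apply Rabs_triang|]. lra.
Qed.

Lemma sum_f_R0_telescope (f : nat -> R) n :
  sum_f_R0 (fun k => f (S k) - f k) n = f (S n) - f O.
Proof. induction n as [|n IH]; simpl; [ring | rewrite IH; ring]. Qed.

Lemma ex_series_le_R (a b : nat -> R) :
  (forall n, Rabs (a n) <= b n) -> ex_series b -> ex_series a.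
Proof. apply (ex_series_le (K := R_AbsRing) (V := R_CompleteNormedModule)). Qed.

Lemma Series_tail_small (b : nat -> R) : ex_series b -> forall eps, 0 < eps ->
  exists N, forall n, (N <= n)%nat -> Rabs (Series (fun k => b (n + k)%nat)) < eps.
Proof.
  intros Hb eps He. pose proof (Series_correct _ Hb) as Hs.
  apply is_series_Reals in Hs. destruct (Hs eps He) as [N HN].
  exists (S N). intros n Hn.
  replace (Series (fun k => b (n + k)%nat)) with (- (sum_f_R0 b (pred n) - Series b)).
  - rewrite Rabs_Ropp. apply HN. lia.
  - rewrite (Series_incr_n b n) by (auto; lia). ring.
Qed.

Lemma telescoping_Series_tail_le (a b f : nat -> R) :
  (forall k, Rabs (a k) <= b k) -> ex_series b -> (forall k, a k = f (S k) - f k) ->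
  forall n, Rabs (f O + Series a - f n) <= Series (fun k => b (n + k)%nat).
Proof.
  intros Hab Hb Ha n.
  assert (Hea : ex_series a) by now apply (ex_series_le_R a b).
  assert (Hbn : ex_series (fun k => b (n + k)%nat)) by now apply ex_series_incr_n.
  assert (Hean : ex_series (fun k => Rabs (a (n + k)%nat))).
  { apply (ex_series_le_R _ (fun k => b (n + k)%nat)); auto.
    intros k. rewrite Rabs_Rabsolu. auto. }
  replace (f O + Series a - f n) with (Series (fun k => a (n + k)%nat)).
  - eapply Rle_trans; [now apply Series_Rabs|].
    apply Series_le; auto. intros k. split; [apply Rabs_pos | auto].
  - destruct n as [|m].
    + simpl. rewrite (Series_ext _ a) by (intros; reflexivity). ring.
    + rewrite (Series_incr_n a (S m)) by (auto; lia). simpl pred.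
      rewrite (sum_eq a (fun k => f (S k) - f k)) by (intros; auto).
      rewrite sum_f_R0_telescope. ring.
Qed.

Lemma loc_unif_cvg_of_summable_steps (Fn : nat -> R -> R) (b : R -> nat -> R) :
  (forall B, 0 <= B -> ex_series (b B)) ->
  (forall B n r, Rabs r <= B -> Rabs (Fn (S n) r - Fn n r) <= b B n) ->
  loc_unif_cvg Fn (fun r => Fn O r + Series (fun k => Fn (S k) r - Fn k r)).
Proof.
  intros Hb Hstep B eps He.
  destruct (Rle_or_lt 0 B) as [HB|HB].
  - destruct (Series_tail_small (b B) (Hb B HB) eps He) as [N HN].
    exists N. intros n r Hn Hr.
    eapply Rle_lt_trans.
    + apply (telescoping_Series_tail_le _ (b B) (fun k => Fn k r)); auto.
    + eapply Rle_lt_trans; [apply Rle_abs | auto].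
  - exists O. intros n r _ Hr. pose proof (Rabs_pos r). lra.
Qed.

Lemma ex_series_pow_div_fact (A c B : R) : 0 <= A -> 0 <= c -> 0 <= B ->
  ex_series (fun n => A * c ^ n * B ^ (S n) / INR (Factorial.fact (S n))).
Proof.
  intros HA Hc HB.
  assert (He : ex_series (fun n => (c * B) ^ n / INR (Factorial.fact n))).
  { eexists. eapply is_series_ext; [|apply (is_exp_Reals (c * B))].
    intros n. simpl. rewrite pow_n_pow. unfold scal; simpl; unfold mult; simpl.
    unfold Rdiv. ring. }
  apply (ex_series_le_R _ (fun n => (A * B) * ((c * B) ^ n / INR (Factorial.fact n)))).
  2:{ apply (ex_series_scal (K := R_AbsRing) (V := R_NormedModule) (A * B)) in He.
      eapply ex_series_ext; [|exact He]. intros; reflexivity. }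
  intros n. pose proof (INR_fact_lt_0 n). pose proof (INR_fact_lt_0 (S n)).
  assert (Hf : INR (Factorial.fact n) <= INR (Factorial.fact (S n))).
  { apply le_INR. rewrite fact_simpl. pose proof (Factorial.lt_O_fact n). nia. }
  assert (0 <= c ^ n) by (apply pow_le; auto). assert (0 <= B ^ n) by (apply pow_le; auto).
  assert (/ INR (Factorial.fact (S n)) <= / INR (Factorial.fact n)) by (apply Rinv_le_contravar; auto).
  assert (0 < / INR (Factorial.fact (S n))) by (apply Rinv_0_lt_compat; auto).
  assert (0 <= A * c ^ n * (B * B ^ n)) by (repeat apply Rmult_le_pos; auto).
  rewrite Rabs_pos_eq by (unfold Rdiv; apply Rmult_le_pos; [apply Rmult_le_pos; [|apply pow_le]; nra | lra]).
  rewrite Rpow_mult_distr. simpl (B ^ S n). unfold Rdiv.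
  replace (A * B * (c ^ n * B ^ n * / INR (Factorial.fact n)))
    with (A * c ^ n * (B * B ^ n) * / INR (Factorial.fact n)) by ring.
  now apply Rmult_le_compat_l.
Qed.

Section LinearODE.

Variables (P Q : R -> R) (y0 u0 K : R).
Hypotheses (HP : forall x, continuous P x) (HQ : forall x, continuous Q x)
  (HPb : forall x, Rabs (P x) <= K) (HQb : forall x, Rabs (Q x) <= K).

Fixpoint picard (n : nat) : (R -> R) * (R -> R) :=
  match n with
  | O => (fun _ => y0, fun _ => u0)
  | S m => (fun r => y0 + RInt (snd (picard m)) 0 r,
            fun r => u0 + RInt (fun s => - P s * snd (picard m) s - Q s * fst (picard m) s) 0 r)
  end.

Lemma picard_continuous n :
  (forall x, continuous (fst (picard n)) x) /\ (forall x, continuous (snd (picard n)) x).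
Proof.
  induction n as [|n [IH1 IH2]]; simpl; split; intros x.
  - apply continuous_const.
  - apply continuous_const.
  - exact (is_derive_continuous _ _ _ (is_derive_plus_RInt_0 _ y0 x IH2)).
  - refine (is_derive_continuous _ _ _ (is_derive_plus_RInt_0 _ u0 x _)).
    intros z. solve_continuous; auto.
Qed.

Let K_nonneg : 0 <= K.
Proof. pose proof (HPb 0). pose proof (Rabs_pos (P 0)). lra. Qed.

Let A := Rabs u0 + K * Rabs u0 + K * Rabs y0.
Let c := 1 + 2 * K.

Let A_nonneg : 0 <= A.
Proof. unfold A. pose proof (Rabs_pos u0). pose proof (Rabs_pos y0). pose proof K_nonneg. nra. Qed.

Definition picard_step_bound (n : nat) (r : R) : R :=
  A * c ^ n * Rabs r ^ (S n) / INR (Factorial.fact (S n)).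

Lemma picard_step_bound_nonneg n r : 0 <= picard_step_bound n r.
Proof.
  unfold picard_step_bound, Rdiv. pose proof (INR_fact_lt_0 (S n)). pose proof K_nonneg.
  apply Rmult_le_pos; [apply Rmult_le_pos; [apply Rmult_le_pos|] |].
  - exact A_nonneg.
  - apply pow_le. unfold c. lra.
  - apply pow_le, Rabs_pos.
  - left. now apply Rinv_0_lt_compat.
Qed.

Lemma picard_step_bound_succ n r :
  picard_step_bound (S n) r
  = A * c ^ (S n) / INR (Factorial.fact (S n)) * Rabs r ^ (S (S n)) / INR (S (S n)).
Proof.
  unfold picard_step_bound. rewrite (fact_simpl (S n)), mult_INR.
  field. pose proof (INR_fact_lt_0 (S n)). split; [lra | apply not_0_INR; lia].
Qed.

Lemma c_mul_picard_step_bound n s :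
  c * picard_step_bound n s = A * c ^ (S n) / INR (Factorial.fact (S n)) * Rabs s ^ (S n).
Proof. unfold picard_step_bound. simpl (c ^ S n). unfold Rdiv. ring. Qed.

Lemma picard_step_le n r :
  Rabs (fst (picard (S n)) r - fst (picard n) r) <= picard_step_bound n r /\
  Rabs (snd (picard (S n)) r - snd (picard n) r) <= picard_step_bound n r.
Proof.
  pose proof K_nonneg as HK. pose proof A_nonneg as HA.
  revert r. induction n as [|n IH]; intros r.
  - unfold picard_step_bound. simpl picard. cbn [fst snd].
    replace (A * c ^ 0 * Rabs r ^ 1 / INR (Factorial.fact 1)) with (A * Rabs r ^ 1 / INR 1)
      by (simpl; field).
    assert (Hcancel : forall a x, a + x - a = x) by (intros; ring).
    rewrite !Hcancel.
    split; (apply abs_RInt_0_le_pow; [intros; solve_continuous |]);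
      intros s _; simpl; pose proof (Rabs_pos u0); pose proof (Rabs_pos y0); unfold A.
    + nra.
    + rewrite Rmult_1_r. unfold Rminus. eapply Rle_trans; [apply Rabs_triang|].
      rewrite Rabs_Ropp, !Rabs_mult, Rabs_Ropp.
      pose proof (HPb s). pose proof (HQb s). nra.
  - destruct (picard_continuous n) as [Hy Hu].
    destruct (picard_continuous (S n)) as [Hy' Hu'].
    rewrite picard_step_bound_succ.
    change (fst (picard (S (S n))) r) with (y0 + RInt (snd (picard (S n))) 0 r).
    change (fst (picard (S n)) r) with (y0 + RInt (snd (picard n)) 0 r).
    change (snd (picard (S (S n))) r)
      with (u0 + RInt (fun s => - P s * snd (picard (S n)) s - Q s * fst (picard (S n)) s) 0 r).
    change (snd (picard (S n)) r)
      with (u0 + RInt (fun s => - P s * snd (picard n) s - Q s * fst (picard n) s) 0 r).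
    assert (Hcancel : forall a x y, a + x - (a + y) = x - y) by (intros; ring).
    rewrite !Hcancel, !RInt_minus_continuous by (intros; solve_continuous; auto).
    split; (apply abs_RInt_0_le_pow; [intros; solve_continuous |]);
      intros s _; rewrite <- c_mul_picard_step_bound; destruct (IH s) as [I1 I2];
      pose proof (picard_step_bound_nonneg n s).
    + unfold c. nra.
    + replace (- P s * snd (picard (S n)) s - Q s * fst (picard (S n)) s
               - (- P s * snd (picard n) s - Q s * fst (picard n) s))
        with (- (P s * (snd (picard (S n)) s - snd (picard n) s))
              - Q s * (fst (picard (S n)) s - fst (picard n) s)) by ring.
      unfold Rminus at 1. eapply Rle_trans; [apply Rabs_triang|].
      rewrite !Rabs_Ropp, !Rabs_mult.
      pose proof (HPb s). pose proof (HQb s).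
      pose proof (Rabs_pos (snd (picard (S n)) s - snd (picard n) s)).
      pose proof (Rabs_pos (fst (picard (S n)) s - fst (picard n) s)).
      unfold c. nra.
Qed.

Lemma picard_step_bound_le_pow B n r : Rabs r <= B ->
  picard_step_bound n r <= A * c ^ n * B ^ (S n) / INR (Factorial.fact (S n)).
Proof.
  intros Hr. unfold picard_step_bound, Rdiv.
  pose proof (INR_fact_lt_0 (S n)). pose proof K_nonneg. pose proof A_nonneg.
  apply Rmult_le_compat_r; [left; now apply Rinv_0_lt_compat|].
  apply Rmult_le_compat_l; [apply Rmult_le_pos; [|apply pow_le; unfold c]; lra|].
  apply pow_incr. split; [apply Rabs_pos | exact Hr].
Qed.

Lemma picard_loc_unif_cvg : exists y u : R -> R,
  loc_unif_cvg (fun n => fst (picard n)) y /\ loc_unif_cvg (fun n => snd (picard n)) u.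
Proof.
  set (b := fun B n => A * c ^ n * B ^ (S n) / INR (Factorial.fact (S n))).
  assert (Hb : forall B, 0 <= B -> ex_series (b B)).
  { intros B HB. apply ex_series_pow_div_fact; auto using A_nonneg. pose proof K_nonneg. unfold c. lra. }
  eexists; eexists. split; apply (loc_unif_cvg_of_summable_steps _ b Hb);
    intros B n r Hr; eapply Rle_trans; try apply (picard_step_le n r);
    now apply picard_step_bound_le_pow.
Qed.

Theorem linear_ode_exists : exists y u : R -> R, y 0 = y0 /\ u 0 = u0 /\
  forall r, is_derive y r (u r) /\ is_derive u r (- P r * u r - Q r * y r).
Proof.
  destruct picard_loc_unif_cvg as [y [u [Hcvg_y Hcvg_u]]].
  assert (Hcy : forall x, continuous y x)
    by (apply (continuous_of_loc_unif_cvg (fun n => fst (picard n))); auto;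
        intros n; apply picard_continuous).
  assert (Hcu : forall x, continuous u x)
    by (apply (continuous_of_loc_unif_cvg (fun n => snd (picard n))); auto;
        intros n; apply picard_continuous).
  assert (Hrhs : forall x, continuous (fun s => - P s * u s - Q s * y s) x)
    by (intros; solve_continuous).
  assert (Hy : forall r, y r = y0 + RInt u 0 r).
  { apply (RInt_eq_of_loc_unif_cvg y u (fun n => fst (picard n)) (fun n => snd (picard n)));
      auto; intros n; apply picard_continuous. }
  assert (Hu : forall r, u r = u0 + RInt (fun s => - P s * u s - Q s * y s) 0 r).
  { apply (RInt_eq_of_loc_unif_cvg u _ (fun n => snd (picard n))
             (fun n s => - P s * snd (picard n) s - Q s * fst (picard n) s)); auto.
    - intros n x. destruct (picard_continuous n). solve_continuous.
    - now apply (loc_unif_cvg_lincomb P Q K). }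
  exists y, u. split; [|split].
  - rewrite Hy, RInt_point. apply Rplus_0_r.
  - rewrite Hu, RInt_point. apply Rplus_0_r.
  - intros r. split.
    + apply (is_derive_ext (fun b => y0 + RInt u 0 b) y r (u r)).
      * intros t. symmetry. apply Hy.
      * exact (is_derive_plus_RInt_0 u y0 r Hcu).
    + apply (is_derive_ext (fun b => u0 + RInt (fun s => - P s * u s - Q s * y s) 0 b) u r).
      * intros t. symmetry. apply Hu.
      * exact (is_derive_plus_RInt_0 _ u0 r Hrhs).
Qed.

End LinearODE.

Lemma gronwall_le (F dF : R -> R) C D r : 0 <= C -> 0 <= D -> 0 <= r ->
  (forall x, 0 <= x <= r -> is_derive F x (dF x)) ->
  (forall x, 0 <= x <= r -> dF x <= C * F x + D) ->
  F r <= (F 0 + D * r) * exp (C * r).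
Proof.
  intros HC HD Hr Hd Hb.
  set (G := fun x => F x * exp (- C * x) - D * x).
  set (dG := fun x => dF x * exp (- C * x) + F x * (- C * exp (- C * x)) - D).
  assert (HG : forall x, 0 <= x <= r -> is_derive G x (dG x)).
  { intros x Hx. unfold G, dG.
    apply (is_derive_minus (fun x => F x * exp (- C * x)) (fun x => D * x)).
    - apply (is_derive_mult F (fun x => exp (- C * x))); auto.
      + auto_derive; auto. ring.
      + intros; apply Rmult_comm.
    - auto_derive; auto. ring. }
  assert (Hinc : G r - G 0 <= 0 * (r - 0)).
  { apply (increment_le_of_derive_le G dG); [lra | intros; apply HG; lra | |].
    - intros x Hx. unfold dG.
      assert (exp (- C * x) <= 1) by (rewrite <- exp_0; apply exp_le_compat; nra).
      pose proof (exp_pos (- C * x)). pose proof (Hb x ltac:(lra)). nra.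
    - intros x Hx. apply (is_derive_continuous G x (dG x)), HG, Hx. }
  unfold G in Hinc. rewrite Rmult_0_r, Rmult_0_l, Rmult_0_r, exp_0 in Hinc.
  assert (Hscaled : F r * exp (- C * r) <= F 0 + D * r) by lra.
  apply (Rmult_le_compat_r (exp (C * r))) in Hscaled; [|left; apply exp_pos].
  rewrite Rmult_assoc, <- exp_plus in Hscaled.
  replace (- C * r + C * r) with 0 in Hscaled by ring.
  now rewrite exp_0, Rmult_1_r in Hscaled.
Qed.

Lemma gronwall_ge (F dF : R -> R) C r : 0 <= r ->
  (forall x, 0 <= x <= r -> is_derive F x (dF x)) ->
  (forall x, 0 <= x <= r -> - C * F x <= dF x) ->
  F 0 <= F r * exp (C * r).
Proof.
  intros Hr Hd Hb.
  set (G := fun x => F x * exp (C * x)).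
  set (dG := fun x => dF x * exp (C * x) + F x * (C * exp (C * x))).
  assert (HG : forall x, 0 <= x <= r -> is_derive G x (dG x)).
  { intros x Hx. unfold G, dG. apply (is_derive_mult F (fun x => exp (C * x))); auto.
    - auto_derive; auto. ring.
    - intros; apply Rmult_comm. }
  assert (Hinc : 0 * (r - 0) <= G r - G 0).
  { apply (increment_ge_of_derive_ge G dG); [lra | intros; apply HG; lra | |].
    - intros x Hx. unfold dG. pose proof (exp_pos (C * x)). pose proof (Hb x ltac:(lra)). nra.
    - intros x Hx. apply (is_derive_continuous G x (dG x)), HG, Hx. }
  unfold G in Hinc. rewrite Rmult_0_r, Rmult_0_l, exp_0 in Hinc. lra.
Qed.

(* At a first zero of min s y, y is still positive by the Gronwall bound, so s vanishes
   there while s' > 0, impossible for a function decreasing to its first zero. *)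
Lemma min_pos_preserved (s y ds dy : R -> R) G a : 0 <= a ->
  (forall x, is_derive s x (ds x)) -> (forall x, is_derive y x (dy x)) ->
  0 < s 0 -> 0 < y 0 ->
  (forall x, 0 <= x <= a -> 0 <= s x -> 0 <= y x -> - G * y x <= dy x) ->
  (forall x, 0 <= x <= a -> s x = 0 -> 0 < y x -> 0 < ds x) ->
  forall x, 0 <= x <= a -> 0 < s x /\ 0 < y x.
Proof.
  intros Ha Hds Hdy Hs0 Hy0 Hgrow Hpush.
  set (h := fun x => Rmin (s x) (y x)).
  enough (Hh : forall x, 0 <= x <= a -> 0 < h x).
  { intros x Hx. specialize (Hh x Hx). unfold h in Hh.
    pose proof (Rmin_l (s x) (y x)). pose proof (Rmin_r (s x) (y x)).
    split; [apply Rlt_le_trans with (Rmin (s x) (y x)) .. ]; lra. }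
  intros x0 Hx0. apply Rnot_le_lt. intros Hx0n.
  destruct (first_zero h x0) as [rs [Hrs [Hhr Hbef]]]; try lra.
  - intros x _. apply continuous_Rmin; eapply is_derive_continuous; [apply Hds | apply Hdy].
  - unfold h. now apply Rmin_glb_lt.
  - assert (Hnonneg : forall x, 0 <= x <= rs -> 0 <= s x /\ 0 <= y x).
    { intros x Hx. assert (0 <= h x) by (destruct (Req_dec x rs) as [->|]; [lra|];
        left; apply Hbef; lra).
      unfold h in H. split; eapply Rle_trans; eauto; [apply Rmin_l | apply Rmin_r]. }
    assert (Hyr : 0 < y rs).
    { assert (y 0 <= y rs * exp (G * rs)).
      { apply (gronwall_ge y dy G rs); [lra | intros; apply Hdy |].
        intros x Hx. destruct (Hnonneg x Hx). apply Hgrow; auto; lra. }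
      pose proof (exp_pos (G * rs)). destruct (Rle_or_lt (y rs) 0); nra. }
    assert (Hsr : s rs = 0).
    { unfold h, Rmin in Hhr. destruct (Rle_dec (s rs) (y rs)); lra. }
    assert (ds rs <= 0).
    { apply (derive_le_0_of_left_min s rs _ rs); [lra | apply Hds |].
      intros hh Hh. rewrite Hsr. apply Hnonneg. lra. }
    specialize (Hpush rs ltac:(lra) Hsr Hyr). lra.
Qed.

(** * The shooting problem *)

Lemma energy_derive (P q e y u : R -> R) x :
  is_derive y x (u x) -> is_derive u x (- P x * u x - q x * y x + e x) ->
  is_derive (fun t => y t ^ 2 + u t ^ 2) x
    (2 * y x * u x * (1 - q x) - 2 * P x * u x ^ 2 + 2 * u x * e x).
Proof.
  intros Hy Hu.
  pose proof (is_derive_plus _ _ x _ _ (is_derive_pow y 2 x _ Hy) (is_derive_pow u 2 x _ Hu)) as H.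
  eapply is_derive_ext; [intros; reflexivity|].
  replace (2 * y x * u x * (1 - q x) - 2 * P x * u x ^ 2 + 2 * u x * e x)
    with (plus (INR 2 * u x * y x ^ 1) (INR 2 * (- P x * u x - q x * y x + e x) * u x ^ 1))
    by (unfold plus; simpl; ring).
  exact H.
Qed.

Lemma energy_rhs_le (p q y u K Kq : R) : Rabs p <= K -> Rabs q <= Kq ->
  Rabs (2 * y * u * (1 - q) - 2 * p * u ^ 2) <= (1 + Kq + 2 * K) * (y ^ 2 + u ^ 2).
Proof.
  intros Hp Hq.
  assert (Hyu : 2 * Rabs y * Rabs u <= y ^ 2 + u ^ 2).
  { pose proof (pow2_ge_0 (Rabs y - Rabs u)). rewrite <- (pow2_abs y), <- (pow2_abs u). nra. }
  assert (H1q : Rabs (1 - q) <= 1 + Kq).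
  { unfold Rminus. eapply Rle_trans; [apply Rabs_triang|]. rewrite Rabs_R1, Rabs_Ropp. lra. }
  assert (Hfirst : Rabs (2 * y * u * (1 - q)) <= (1 + Kq) * (y ^ 2 + u ^ 2)).
  { rewrite !Rabs_mult, (Rabs_pos_eq 2) by lra.
    pose proof (Rabs_pos y). pose proof (Rabs_pos u).
    apply Rle_trans with ((2 * Rabs y * Rabs u) * (1 + Kq)).
    - apply Rmult_le_compat_l; nra.
    - rewrite Rmult_comm. apply Rmult_le_compat_l; [pose proof (Rabs_pos q); lra | exact Hyu]. }
  assert (Hsecond : Rabs (2 * p * u ^ 2) <= 2 * K * (y ^ 2 + u ^ 2)).
  { rewrite !Rabs_mult, (Rabs_pos_eq 2), (Rabs_pos_eq (u ^ 2)) by (try apply pow2_ge_0; lra).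
    pose proof (pow2_ge_0 y). pose proof (pow2_ge_0 u). pose proof (Rabs_pos p). nra. }
  unfold Rminus at 1. eapply Rle_trans; [apply Rabs_triang|].
  rewrite Rabs_Ropp. lra.
Qed.

Section Shooting.

Variables (P Q : R -> R) (K al : R).
Hypotheses (HPb : forall x, Rabs (P x) <= K) (HQb : forall x, Rabs (Q x) <= K).

(* The initial value problem  y'' + P y' + (Q + lam) y = 0,  y(0) = 1,  y'(0) = al,
   written as a first order system; the initial data satisfy the Robin condition at 0. *)
Definition shooting (lam : R) (y u : R -> R) : Prop :=
  y 0 = 1 /\ u 0 = al /\
  forall r, is_derive y r (u r) /\ is_derive u r (- P r * u r - (Q r + lam) * y r).

Let K_nonneg : 0 <= K.
Proof. pose proof (HPb 0). pose proof (Rabs_pos (P 0)). lra. Qed.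

Lemma shooting_energy_derive lam y u x : shooting lam y u ->
  is_derive (fun t => y t ^ 2 + u t ^ 2) x
    (2 * y x * u x * (1 - (Q x + lam)) - 2 * P x * u x ^ 2 + 2 * u x * 0).
Proof.
  intros [_ [_ Hd]]. destruct (Hd x) as [Hy Hu].
  refine (energy_derive P (fun t => Q t + lam) (fun _ => 0) y u x Hy _).
  now rewrite Rplus_0_r.
Qed.

Lemma shooting_energy_rhs_le lam y u x :
  Rabs (2 * y * u * (1 - (Q x + lam)) - 2 * P x * u ^ 2 + 2 * u * 0)
  <= (1 + 3 * K + Rabs lam) * (y ^ 2 + u ^ 2).
Proof.
  rewrite Rmult_0_r, Rplus_0_r.
  replace (1 + 3 * K + Rabs lam) with (1 + (K + Rabs lam) + 2 * K) by ring.
  apply energy_rhs_le; auto.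
  eapply Rle_trans; [apply Rabs_triang|]. specialize (HQb x). lra.
Qed.

Let energy_rhs lam (y u : R -> R) x :=
  2 * y x * u x * (1 - (Q x + lam)) - 2 * P x * u x ^ 2 + 2 * u x * 0.

Lemma shooting_energy_le lam y u r : shooting lam y u -> 0 <= r ->
  y r ^ 2 + u r ^ 2 <= (1 + al ^ 2) * exp ((1 + 3 * K + Rabs lam) * r).
Proof.
  intros Hs Hr.
  assert (H0 : y 0 ^ 2 + u 0 ^ 2 = 1 + al ^ 2) by (destruct Hs as [-> [-> _]]; ring).
  pose proof (gronwall_le (fun t => y t ^ 2 + u t ^ 2) (energy_rhs lam y u)
                (1 + 3 * K + Rabs lam) 0 r) as Hgr.
  rewrite Rmult_0_l, Rplus_0_r, H0 in Hgr. apply Hgr; [pose proof (Rabs_pos lam); lra | lra | lra | |].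
  - intros x _. now apply shooting_energy_derive.
  - intros x _. rewrite Rplus_0_r.
    eapply Rle_trans; [apply Rle_abs | apply shooting_energy_rhs_le].
Qed.

Lemma shooting_no_double_zero lam y u r : shooting lam y u -> 0 <= r ->
  y r = 0 -> u r = 0 -> False.
Proof.
  intros Hs Hr Hy Hu.
  assert (H0 : y 0 ^ 2 + u 0 ^ 2 = 1 + al ^ 2) by (destruct Hs as [-> [-> _]]; ring).
  pose proof (gronwall_ge (fun t => y t ^ 2 + u t ^ 2) (energy_rhs lam y u)
                (1 + 3 * K + Rabs lam) r Hr) as Hgr.
  cbv beta in Hgr. rewrite H0, Hy, Hu in Hgr.
  enough (1 + al ^ 2 <= 0) by (pose proof (pow2_ge_0 al); lra).
  replace 0 with ((0 ^ 2 + 0 ^ 2) * exp ((1 + 3 * K + Rabs lam) * r)) by ring.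
  apply Hgr.
  - intros x _. now apply shooting_energy_derive.
  - intros x _. pose proof (shooting_energy_rhs_le lam (y x) (u x) x) as Hb.
    apply Rabs_le_between in Hb. unfold energy_rhs. lra.
Qed.

Lemma shooting_y_sq_le Lm a mu y u : shooting mu y u -> Rabs mu <= Lm ->
  forall x, 0 <= x <= a -> y x ^ 2 <= (1 + al ^ 2) * exp ((1 + 3 * K + Lm) * a).
Proof.
  intros Hs Hmu x Hx.
  pose proof (shooting_energy_le mu y u x Hs ltac:(lra)). pose proof (pow2_ge_0 (u x)).
  assert (exp ((1 + 3 * K + Rabs mu) * x) <= exp ((1 + 3 * K + Lm) * a)).
  { apply exp_le_compat. pose proof (Rabs_pos mu). pose proof K_nonneg.
    apply Rmult_le_compat; lra. }
  pose proof (pow2_ge_0 al). nra.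
Qed.

Lemma shooting_diff_energy_derive lam mu y1 u1 y2 u2 x :
  shooting lam y1 u1 -> shooting mu y2 u2 ->
  is_derive (fun t => (y1 t - y2 t) ^ 2 + (u1 t - u2 t) ^ 2) x
    (2 * (y1 x - y2 x) * (u1 x - u2 x) * (1 - (Q x + lam))
     - 2 * P x * (u1 x - u2 x) ^ 2 + 2 * (u1 x - u2 x) * (- ((lam - mu) * y2 x))).
Proof.
  intros [_ [_ D1]] [_ [_ D2]].
  destruct (D1 x) as [Hy1 Hu1]. destruct (D2 x) as [Hy2 Hu2].
  refine (energy_derive P (fun t => Q t + lam) (fun t => - ((lam - mu) * y2 t))
            (fun t => y1 t - y2 t) (fun t => u1 t - u2 t) x _ _).
  - apply (is_derive_minus _ _ x _ _ Hy1 Hy2).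
  - eapply is_derive_ext; [intros; reflexivity|].
    replace (- P x * (u1 x - u2 x) - (Q x + lam) * (y1 x - y2 x) + - ((lam - mu) * y2 x))
      with (minus (- P x * u1 x - (Q x + lam) * y1 x) (- P x * u2 x - (Q x + mu) * y2 x))
      by (unfold minus, plus, opp; simpl; ring).
    apply (is_derive_minus _ _ x _ _ Hu1 Hu2).
Qed.

Lemma shooting_diff_energy_le Lm a lam mu y1 u1 y2 u2 r :
  Rabs lam <= Lm -> Rabs mu <= Lm -> shooting lam y1 u1 -> shooting mu y2 u2 -> 0 <= r <= a ->
  (y1 r - y2 r) ^ 2 + (u1 r - u2 r) ^ 2
  <= (1 + al ^ 2) * exp ((1 + 3 * K + Lm) * a) * a * exp ((2 + 3 * K + Lm) * a) * (lam - mu) ^ 2.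
Proof.
  intros Hl Hm S1 S2 Hr. pose proof K_nonneg as HK. pose proof (Rabs_pos lam).
  set (M := (1 + al ^ 2) * exp ((1 + 3 * K + Lm) * a)).
  set (C := 2 + 3 * K + Lm).
  set (d := lam - mu).
  assert (HM : 0 <= M) by (unfold M; pose proof (exp_pos ((1 + 3 * K + Lm) * a));
                           pose proof (pow2_ge_0 al); nra).
  set (E := fun x => (y1 x - y2 x) ^ 2 + (u1 x - u2 x) ^ 2).
  assert (HE0 : E 0 = 0).
  { destruct S1 as [A1 [B1 _]]. destruct S2 as [A2 [B2 _]]. unfold E. rewrite A1, A2, B1, B2. ring. }
  assert (Hgr : E r <= (E 0 + d ^ 2 * M * r) * exp (C * r)).
  { apply (gronwall_le E (fun x => 2 * (y1 x - y2 x) * (u1 x - u2 x) * (1 - (Q x + lam))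
             - 2 * P x * (u1 x - u2 x) ^ 2 + 2 * (u1 x - u2 x) * (- (d * y2 x))) C (d ^ 2 * M) r);
      [unfold C; lra | pose proof (pow2_ge_0 d); nra | lra | |].
    - intros x _. now apply (shooting_diff_energy_derive lam mu).
    - intros x Hx.
      pose proof (shooting_y_sq_le Lm a mu y2 u2 S2 Hm x ltac:(lra)) as Hy2.
      assert (Hq : Rabs (Q x + lam) <= K + Lm)
        by (eapply Rle_trans; [apply Rabs_triang|]; specialize (HQb x); lra).
      pose proof (energy_rhs_le (P x) (Q x + lam) (y1 x - y2 x) (u1 x - u2 x) K (K + Lm)
                    (HPb x) Hq) as Hrhs.
      apply Rabs_le_between in Hrhs.
      assert (- (2 * (u1 x - u2 x) * (d * y2 x)) <= (u1 x - u2 x) ^ 2 + d ^ 2 * y2 x ^ 2)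
        by (pose proof (pow2_ge_0 (u1 x - u2 x + d * y2 x)); nra).
      assert (d ^ 2 * y2 x ^ 2 <= d ^ 2 * M) by (apply Rmult_le_compat_l; auto using pow2_ge_0).
      pose proof (pow2_ge_0 (y1 x - y2 x)). unfold E, C, d in *. nra. }
  fold E M C d. rewrite HE0, Rplus_0_l in Hgr. eapply Rle_trans; [exact Hgr|].
  assert (exp (C * r) <= exp (C * a)) by (apply exp_le_compat; unfold C; apply Rmult_le_compat_l; lra).
  pose proof (exp_pos (C * r)). pose proof (pow2_ge_0 d).
  assert (d ^ 2 * M * r <= d ^ 2 * M * a) by (apply Rmult_le_compat_l; [apply Rmult_le_pos|]; lra).
  assert (0 <= d ^ 2 * M * r) by (apply Rmult_le_pos; [apply Rmult_le_pos|]; lra).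
  replace (M * a * exp (C * a) * d ^ 2) with ((d ^ 2 * M * a) * exp (C * a)) by ring.
  apply Rmult_le_compat; lra.
Qed.

Lemma shooting_lipschitz Lm a : 0 <= Lm -> 0 <= a -> exists L, 0 <= L /\
  forall lam mu y1 u1 y2 u2, Rabs lam <= Lm -> Rabs mu <= Lm ->
  shooting lam y1 u1 -> shooting mu y2 u2 -> forall r, 0 <= r <= a ->
  Rabs (y1 r - y2 r) <= L * Rabs (lam - mu) /\ Rabs (u1 r - u2 r) <= L * Rabs (lam - mu).
Proof.
  intros HLm Ha.
  set (C := (1 + al ^ 2) * exp ((1 + 3 * K + Lm) * a) * a * exp ((2 + 3 * K + Lm) * a)).
  assert (HC : 0 <= C).
  { pose proof (exp_pos ((1 + 3 * K + Lm) * a)). pose proof (exp_pos ((2 + 3 * K + Lm) * a)).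
    pose proof (pow2_ge_0 al). unfold C. repeat apply Rmult_le_pos; lra. }
  exists (sqrt C). split; [apply sqrt_pos|].
  intros lam mu y1 u1 y2 u2 Hl Hm S1 S2 r Hr.
  pose proof (shooting_diff_energy_le Lm a lam mu y1 u1 y2 u2 r Hl Hm S1 S2 Hr) as HE.
  fold C in HE.
  split; apply abs_le_sqrt_mul_abs; auto;
    [pose proof (pow2_ge_0 (u1 r - u2 r)) | pose proof (pow2_ge_0 (y1 r - y2 r))]; lra.
Qed.

Lemma shooting_shifted_derive lam y u (g : R -> R) c x : shooting lam y u ->
  is_derive g x c ->
  is_derive (fun t => u t - g t * y t) x
    (- (P x + g x) * (u x - g x * y x) + (- lam - Q x - c - (P x + g x) * g x) * y x).
Proof.
  intros [_ [_ Hd]] Hg. destruct (Hd x) as [Hy Hu].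
  pose proof (is_derive_minus _ _ x _ _ Hu
                (is_derive_mult _ _ x _ _ Hg Hy (fun a b => Rmult_comm a b))) as H.
  eapply is_derive_ext; [intros; reflexivity|].
  replace (- (P x + g x) * (u x - g x * y x) + (- lam - Q x - c - (P x + g x) * g x) * y x)
    with (minus (- P x * u x - (Q x + lam) * y x) (plus (mult c (y x)) (mult (g x) (u x))))
    by (unfold minus, plus, opp, mult; simpl; ring).
  exact H.
Qed.

(* For very negative lam the shifted quantity s = u - g y, with a linear weight
   g chosen so that s(0) = 1 and g(a) + al >= 1, obeys s' = -(P + g) s + m y with m >= 1;
   hence s and y stay positive and so does u(a) + al y(a) = s(a) + (g(a) + al) y(a). *)
Lemma shooting_positive_of_very_negative a : 0 < a -> exists Lam, forall lam y u,
  lam <= - Lam -> shooting lam y u ->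
  (forall r, 0 <= r <= a -> 0 < y r) /\ 0 < u a + al * y a.
Proof.
  intros Ha. pose proof K_nonneg as HK. pose proof (Rabs_pos al) as Hal.
  set (c := (2 * Rabs al + 2) / a). set (G := Rabs al + 1 + c * a).
  assert (Hc : 0 <= c) by (apply Rdiv_le_0_compat; lra).
  assert (Hca : c * a = 2 * Rabs al + 2) by (unfold c; field; lra).
  assert (HG : 0 <= G) by (unfold G; nra).
  set (g := fun x => al - 1 + c * x).
  assert (Hg : forall x, 0 <= x <= a -> Rabs (g x) <= G).
  { intros x Hx. unfold g, G. apply Rabs_le. pose proof (Rle_abs al). pose proof (Rle_abs (- al)).
    rewrite Rabs_Ropp in *. assert (c * x <= c * a) by nra. nra. }
  exists (1 + K + c + (K + G) * G). intros lam y u Hlam Hs.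
  destruct Hs as [Hy0 [Hu0 Hd]].
  set (s := fun x => u x - g x * y x).
  set (m := fun x => - lam - Q x - c - (P x + g x) * g x).
  assert (Hds : forall x, is_derive s x (- (P x + g x) * s x + m x * y x)).
  { intros x. apply (shooting_shifted_derive lam y u g c x (conj Hy0 (conj Hu0 Hd))).
    unfold g. auto_derive; auto. ring. }
  assert (Hm : forall x, 0 <= x <= a -> 1 <= m x).
  { intros x Hx. unfold m.
    assert (Rabs ((P x + g x) * g x) <= (K + G) * G).
    { rewrite Rabs_mult. apply Rmult_le_compat; try apply Rabs_pos; [|now apply Hg].
      eapply Rle_trans; [apply Rabs_triang|]. specialize (HPb x). specialize (Hg x Hx). lra. }
    pose proof (Rle_abs ((P x + g x) * g x)). pose proof (Rle_abs (Q x)). specialize (HQb x). lra. }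
  assert (Hs0 : 0 < s 0) by (unfold s, g; rewrite Hy0, Hu0; lra).
  assert (Hgrow : forall x, 0 <= x <= a -> 0 <= s x -> 0 <= y x -> - G * y x <= u x).
  { intros x Hx Hsx Hyx. replace (u x) with (s x + g x * y x) by (unfold s; ring).
    pose proof (Hg x Hx). pose proof (Rle_abs (- g x)). rewrite Rabs_Ropp in *. nra. }
  assert (Hpush : forall x, 0 <= x <= a -> s x = 0 -> 0 < y x ->
                    0 < - (P x + g x) * s x + m x * y x).
  { intros x Hx Hsx Hyx. rewrite Hsx. specialize (Hm x Hx). nra. }
  pose proof (min_pos_preserved s y _ u G a ltac:(lra) Hds (fun x => proj1 (Hd x))
                Hs0 ltac:(lra) Hgrow Hpush) as Hpos.
  split; [intros r Hr; now apply Hpos|].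
  destruct (Hpos a) as [Hsa Hya]; [lra|].
  replace (u a + al * y a) with (s a + (g a + al) * y a) by (unfold s; ring).
  assert (1 <= g a + al) by (unfold g; rewrite Hca; pose proof (Rle_abs (- al));
                            rewrite Rabs_Ropp in *; lra).
  nra.
Qed.

Lemma shooting_pos_of_nonneg lam y u a : shooting lam y u ->
  (forall r, 0 <= r <= a -> 0 <= y r) -> 0 <= u a + al * y a ->
  forall r, 0 <= r <= a -> 0 < y r.
Proof.
  intros Hs Hnn HB r Hr.
  destruct (Req_dec (y r) 0) as [Hz|Hnz]; [exfalso | specialize (Hnn r Hr); lra].
  pose proof Hs as [Hy0 [_ Hd]].
  assert (Hr0 : r <> 0) by (intros ->; lra).
  assert (Hleft : u r <= 0).
  { apply (derive_le_0_of_left_min y r (u r) r); [lra | apply Hd |].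
    intros h Hh. rewrite Hz. apply Hnn. lra. }
  destruct (Req_dec r a) as [->|Hra].
  - apply (shooting_no_double_zero lam y u a); auto; [lra|]. rewrite Hz in HB. lra.
  - assert (Hright : 0 <= u r).
    { apply (derive_ge_0_of_right_min y r (u r) (a - r)); [lra | apply Hd |].
      intros h Hh. rewrite Hz. apply Hnn. lra. }
    apply (shooting_no_double_zero lam y u r); auto; lra.
Qed.

Section Family.

Variables (a : R) (Y U : R -> R -> R).
Hypotheses (Ha : 0 < a) (HYU : forall lam, shooting lam (Y lam) (U lam)).

Definition robin_defect (lam : R) : R := U lam a + al * Y lam a.

Definition shooting_good (lam : R) : Prop :=
  (forall r, 0 <= r <= a -> 0 < Y lam r) /\ 0 < robin_defect lam.

Lemma shooting_family_lipschitz lo : lo <= 0 -> exists L, 0 <= L /\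
  forall lam mu r, lo <= lam <= 1 -> lo <= mu <= 1 -> 0 <= r <= a ->
  Rabs (Y lam r - Y mu r) <= L * Rabs (lam - mu) /\
  Rabs (robin_defect lam - robin_defect mu) <= L * Rabs (lam - mu).
Proof.
  intros Hlo.
  destruct (shooting_lipschitz (1 - lo) a ltac:(lra) ltac:(lra)) as [L [HL Hlip]].
  exists ((1 + Rabs al) * L). split; [pose proof (Rabs_pos al); nra|].
  intros lam mu r Hl Hm Hr.
  assert (Hbnd : forall z, lo <= z <= 1 -> Rabs z <= 1 - lo) by (intros z Hz; apply Rabs_le; lra).
  destruct (Hlip lam mu _ _ _ _ (Hbnd _ Hl) (Hbnd _ Hm) (HYU lam) (HYU mu) r Hr) as [Hy _].
  destruct (Hlip lam mu _ _ _ _ (Hbnd _ Hl) (Hbnd _ Hm) (HYU lam) (HYU mu) a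
              ltac:(lra)) as [Hya Hua].
  pose proof (Rabs_pos al). pose proof (Rabs_pos (lam - mu)).
  assert (0 <= Rabs al * (L * Rabs (lam - mu))) by (apply Rmult_le_pos; [|apply Rmult_le_pos]; lra).
  split; [nra|].
  unfold robin_defect. replace (U lam a + al * Y lam a - (U mu a + al * Y mu a))
    with ((U lam a - U mu a) + al * (Y lam a - Y mu a)) by ring.
  eapply Rle_trans; [apply Rabs_triang|]. rewrite Rabs_mult.
  pose proof (Rabs_pos (Y lam a - Y mu a)).
  assert (Rabs al * Rabs (Y lam a - Y mu a) <= Rabs al * (L * Rabs (lam - mu)))
    by (apply Rmult_le_compat_l; auto). nra.
Qed.

Lemma shooting_good_right lam L : 0 <= L ->
  (forall mu r, lam <= mu < lam + 1 -> 0 <= r <= a ->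
     Rabs (Y mu r - Y lam r) <= L * Rabs (mu - lam) /\
     Rabs (robin_defect mu - robin_defect lam) <= L * Rabs (mu - lam)) ->
  shooting_good lam -> exists d, 0 < d /\ forall mu, lam <= mu < lam + d -> shooting_good mu.
Proof.
  intros HL Hlip [HY HB].
  destruct (continuity_ab_min (Y lam) 0 a) as [xm [Hxm Hxmr]]; [lra| |].
  { intros x _. apply continuity_pt_filterlim.
    apply (is_derive_continuous _ _ _ (proj1 (proj2 (proj2 (HYU lam)) x))). }
  pose proof (HY xm Hxmr) as Hm.
  set (d := Rmin (Rmin (Y lam xm / (L + 1)) (robin_defect lam / (L + 1))) 1).
  assert (Hd : 0 < d) by (unfold d; repeat apply Rmin_glb_lt; try apply Rdiv_lt_0_compat; lra).
  assert (Hshift : forall z, 0 < z -> d <= z / (L + 1) -> L * d < z).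
  { intros z Hz Hdz. apply (Rmult_le_compat_l (L + 1)) in Hdz; [|lra].
    replace ((L + 1) * (z / (L + 1))) with z in Hdz by (field; lra). nra. }
  assert (Hd1 : L * d < Y lam xm)
    by (apply Hshift; auto; unfold d; eapply Rle_trans; apply Rmin_l).
  assert (Hd2 : L * d < robin_defect lam)
    by (apply Hshift; auto; unfold d; eapply Rle_trans; [apply Rmin_l | apply Rmin_r]).
  assert (Hd3 : d <= 1) by apply Rmin_r.
  exists d. split; auto. intros mu Hmu.
  assert (Hdist : L * Rabs (mu - lam) <= L * d)
    by (apply Rmult_le_compat_l; auto; rewrite Rabs_pos_eq; lra).
  split.
  - intros r Hr. destruct (Hlip mu r ltac:(lra) Hr) as [Hy _].
    apply Rabs_le_between in Hy. specialize (Hxm r Hr). lra.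
  - destruct (Hlip mu 0 ltac:(lra) ltac:(lra)) as [_ Hb].
    apply Rabs_le_between in Hb. lra.
Qed.

(* The good set contains all very negative lam but not lam0; at its first failure lp,
   limits from the left give y >= 0 and a nonnegative defect, hence y > 0, so the
   defect must vanish there. *)
Lemma shooting_robin_zero lam0 : lam0 < 0 ->
  ((forall r, 0 <= r <= a -> 0 < Y lam0 r) -> robin_defect lam0 < 0) ->
  exists lam, lam < 0 /\ robin_defect lam = 0.
Proof.
  intros Hl0 Hlam0.
  destruct (shooting_positive_of_very_negative a Ha) as [Lam HLam].
  pose proof (Rmin_l (- Lam) (lam0 - 1)). pose proof (Rmin_r (- Lam) (lam0 - 1)).
  set (Lb := Rmin (- Lam) (lam0 - 1)) in *.
  destruct (shooting_family_lipschitz (Lb - 1) ltac:(lra)) as [L [HL Hlip]].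
  destruct (first_failure shooting_good Lb lam0) as [lp [Hlp [_ [Hlo Hhi]]]]; [lra | | |].
  { apply (HLam Lb); auto. }
  { intros [Hy HB]. specialize (Hlam0 Hy). lra. }
  assert (Hnear : forall mu r, Rabs (mu - lp) < 1 -> 0 <= r <= a ->
            Rabs (Y mu r - Y lp r) <= L * Rabs (mu - lp) /\
            Rabs (robin_defect mu - robin_defect lp) <= L * Rabs (mu - lp)).
  { intros mu r Hmu Hr. apply Rabs_lt_between in Hmu. apply Hlip; auto; lra. }
  assert (HYnn : forall r, 0 <= r <= a -> 0 <= Y lp r).
  { intros r Hr. apply (continuous_ge_0_of_frequently (fun mu => Y mu r) lp).
    - apply (continuous_of_lipschitz_near _ lp L 1); [lra|]. intros mu Hmu. now apply Hnear.
    - intros d Hd. destruct (Hlo d Hd) as [mu [Hmu [Hmu' [Hg _]]]].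
      exists mu. split; [apply Rabs_lt_between; lra | left; apply Hg, Hr]. }
  assert (HBnn : 0 <= robin_defect lp).
  { apply (continuous_ge_0_of_frequently robin_defect lp).
    - apply (continuous_of_lipschitz_near _ lp L 1); [lra|]. intros mu Hmu.
      apply (Hnear mu 0); auto; lra.
    - intros d Hd. destruct (Hlo d Hd) as [mu [Hmu [Hmu' [_ Hg]]]].
      exists mu. split; [apply Rabs_lt_between; lra | left; apply Hg]. }
  exists lp. split; [lra|]. destruct HBnn as [HBpos | HB0]; [exfalso | now symmetry].
  destruct (shooting_good_right lp L HL) as [d [Hd Hright]].
  - intros mu r Hmu Hr. apply Hnear; auto. apply Rabs_lt_between. lra.
  - split; [|exact HBpos]. apply (shooting_pos_of_nonneg lp (Y lp) (U lp) a); auto. now left.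
  - destruct (Hhi d Hd) as [mu [Hmu [_ Hbad]]]. apply Hbad, Hright. lra.
Qed.

End Family.

End Shooting.

(** * The Picone identity *)

Definition picone_fn (psi v y u : R -> R) (x : R) : R :=
  psi x * Derive v x ^ 2 * (u x / y x) - psi x * Derive v x * Derive (Derive v) x.

Section Picone.

Variables (psi f v P Q y u : R -> R) (a lam : R).
Hypotheses
  (Hpsi_pos : forall x, 0 <= x <= a -> 0 < psi x)
  (Hpsi_d : forall x, 0 <= x <= a -> ex_derive psi x)
  (Hpsi_dd : forall x, 0 <= x <= a -> ex_derive (Derive psi) x)
  (Hf_d : forall x, ex_derive f x)
  (Hv_d : forall x, 0 <= x <= a -> ex_derive v x)
  (Hv_dd : forall x, 0 <= x <= a -> ex_derive (Derive v) x)
  (Hv_eq : forall x, 0 < x < a ->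
     Derive_n v 2 x + Derive psi x / psi x * Derive v x + f (v x) = 0)
  (HP : forall x, 0 < x < a -> P x = Derive psi x / psi x)
  (HQ : forall x, 0 < x < a -> Q x = Derive f (v x))
  (Hy_d : forall x, is_derive y x (u x))
  (Hu_d : forall x, is_derive u x (- P x * u x - (Q x + lam) * y x))
  (Hy_pos : forall x, 0 <= x <= a -> 0 < y x).

Lemma radial_third_derivative x : 0 < x < a ->
  is_derive (Derive (Derive v)) x
    (- ((Derive (Derive psi) x / psi x - (Derive psi x / psi x) ^ 2) * Derive v x)
     - Derive psi x / psi x * Derive (Derive v) x - Derive v x * Derive f (v x)).
Proof.
  intros Hx.
  apply (is_derive_ext_loc (fun r => - (Derive psi r / psi r) * Derive v r - f (v r))).
  - set (dl := Rmin x (a - x)).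
    assert (Hdl : 0 < dl) by (unfold dl; apply Rmin_glb_lt; lra).
    exists (mkposreal dl Hdl). intros t Ht. cbn in Ht. unfold AbsRing_ball, abs, minus, plus, opp in Ht.
    cbn in Ht. apply Rabs_lt_between in Ht.
    pose proof (Rmin_l x (a - x)). pose proof (Rmin_r x (a - x)).
    pose proof (Hv_eq t ltac:(unfold dl in *; lra)) as Heq.
    change (Derive_n v 2 t) with (Derive (Derive v) t) in Heq. lra.
  - pose proof (Hpsi_pos x ltac:(lra)).
    auto_derive; [repeat split; auto; try apply Hpsi_dd; try apply Hpsi_d;
                  try apply Hv_dd; try apply Hv_d; lra|].
    change (Derive (fun t => Derive psi t) x) with (Derive (Derive psi) x).
    change (Derive (fun t => psi t) x) with (Derive psi x).
    change (Derive (fun t => Derive v t) x) with (Derive (Derive v) x).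
    change (Derive (fun t => v t) x) with (Derive v x).
    change (Derive (fun t => f t) (v x)) with (Derive f (v x)).
    field. lra.
Qed.

Lemma picone_fn_derive x : 0 < x < a ->
  is_derive (picone_fn psi v y u) x
    (- lam * psi x * Derive v x ^ 2
     + psi x * (Derive (Derive psi) x / psi x - (Derive psi x / psi x) ^ 2) * Derive v x ^ 2
     - psi x * (Derive (Derive v) x - Derive v x * u x / y x) ^ 2).
Proof.
  intros Hx. pose proof (Hpsi_pos x ltac:(lra)). pose proof (Hy_pos x ltac:(lra)).
  assert (Hv2 : Derive (Derive v) x = - (Derive psi x / psi x) * Derive v x - f (v x)).
  { pose proof (Hv_eq x Hx) as Heq. change (Derive_n v 2 x) with (Derive (Derive v) x) in Heq.
    lra. }
  pose proof (radial_third_derivative x Hx) as H3.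
  pose proof (is_derive_unique _ _ _ H3) as Hv3.
  pose proof (is_derive_unique _ _ _ (Hy_d x)) as Hy'.
  pose proof (is_derive_unique _ _ _ (Hu_d x)) as Hu'.
  unfold picone_fn. auto_derive.
  - repeat split; auto; try apply Hpsi_d; try apply Hv_dd; try lra.
    + eexists. apply Hu_d.
    + eexists. apply Hy_d.
    + eexists. exact H3.
  - change (Derive (fun t => psi t) x) with (Derive psi x).
    change (Derive (fun t => Derive v t) x) with (Derive (Derive v) x).
    change (Derive (fun t => Derive (Derive v) t) x) with (Derive (Derive (Derive v)) x).
    change (Derive (fun t => u t) x) with (Derive u x).
    change (Derive (fun t => y t) x) with (Derive y x).
    rewrite Hv3, Hu', Hy', HP, HQ, Hv2 by lra. field. lra.
Qed.

Lemma picone_fn_continuous x : 0 <= x <= a ->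
  continuous (Derive_n v 2) x -> continuous (picone_fn psi v y u) x.
Proof.
  intros Hx Hv2. pose proof (Hy_pos x Hx).
  assert (continuous psi x) by (apply (ex_derive_continuous (V := R_NormedModule)), Hpsi_d, Hx).
  assert (continuous (Derive v) x)
    by (apply (ex_derive_continuous (V := R_NormedModule)), Hv_dd, Hx).
  assert (continuous u x) by apply (is_derive_continuous _ _ _ (Hu_d x)).
  assert (continuous y x) by apply (is_derive_continuous _ _ _ (Hy_d x)).
  assert (continuous (fun t => u t / y t) x).
  { apply continuity_pt_filterlim, continuity_pt_div; try apply continuity_pt_filterlim; auto; lra. }
  assert (continuous (fun t => Derive v t ^ 2) x).
  { apply (continuous_ext (fun t => Derive v t * Derive v t)); [|solve_continuous].
    intros t. apply Rsqr_pow2. }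
  unfold picone_fn. solve_continuous.
Qed.

Lemma picone_increment_le M : 0 <= a -> lam <= 0 ->
  (forall x, 0 < x < a -> - Derive_n psi 2 x / psi x + (Derive psi x / psi x) ^ 2 >= 0) ->
  (forall x, 0 <= x <= a -> continuous (Derive_n v 2) x) ->
  (forall x, 0 <= x <= a -> psi x * Derive v x ^ 2 <= M) ->
  picone_fn psi v y u a - picone_fn psi v y u 0 <= - lam * M * a.
Proof.
  intros Ha Hlam Hcurv Hv_c2 HM.
  replace (- lam * M * a) with (- lam * M * (a - 0)) by ring.
  apply (increment_le_of_derive_le (picone_fn psi v y u) (fun x =>
    - lam * psi x * Derive v x ^ 2
    + psi x * (Derive (Derive psi) x / psi x - (Derive psi x / psi x) ^ 2) * Derive v x ^ 2
    - psi x * (Derive (Derive v) x - Derive v x * u x / y x) ^ 2) 0 a); auto.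
  - exact picone_fn_derive.
  - intros x Hx. pose proof (HM x ltac:(lra)) as HMx. pose proof (Hpsi_pos x ltac:(lra)).
    pose proof (Hcurv x Hx) as Hc. change (Derive_n psi 2 x) with (Derive (Derive psi) x) in Hc.
    assert (Hconc : psi x * (Derive (Derive psi) x / psi x - (Derive psi x / psi x) ^ 2) <= 0).
    { unfold Rdiv in *. rewrite <- Ropp_mult_distr_l in Hc. nra. }
    pose proof (pow2_ge_0 (Derive v x)).
    pose proof (pow2_ge_0 (Derive (Derive v) x - Derive v x * u x / y x)).
    assert (0 <= psi x * (Derive (Derive v) x - Derive v x * u x / y x) ^ 2) by nra.
    nra.
  - intros x Hx. apply picone_fn_continuous; auto.
Qed.

End Picone.

(* The projection of r onto [0, a], written so that its continuity is immediate. *)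
Definition clamp (a r : R) : R := (Rabs r - Rabs (r - a) + a) * / 2.

Lemma clamp_mem a r : 0 <= a -> 0 <= clamp a r <= a.
Proof. intros Ha. unfold clamp, Rabs. destruct (Rcase_abs r), (Rcase_abs (r - a)); lra. Qed.

Lemma clamp_id a r : 0 <= r <= a -> clamp a r = r.
Proof. intros Hr. unfold clamp, Rabs. destruct (Rcase_abs r), (Rcase_abs (r - a)); lra. Qed.

Lemma continuous_clamp a x : continuous (clamp a) x.
Proof. unfold clamp. solve_continuous. Qed.

Lemma bounded_continuous_extension (g : R -> R) a : 0 <= a ->
  (forall x, 0 <= x <= a -> continuous g x) ->
  exists G K, (forall x, continuous G x) /\ (forall x, Rabs (G x) <= K) /\
    forall x, 0 <= x <= a -> G x = g x.
Proof.
  intros Ha Hg.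
  destruct (continuity_ab_maj (fun r => Rabs (g r)) 0 a Ha) as [xm [Hxm Hxmr]].
  { intros x Hx. apply continuity_pt_filterlim, continuous_Rabs_comp, Hg, Hx. }
  exists (fun r => g (clamp a r)), (Rabs (g xm)). repeat split.
  - intros x. apply (continuous_comp (clamp a) g); [apply continuous_clamp|].
    apply Hg, clamp_mem, Ha.
  - intros x. apply Hxm, clamp_mem, Ha.
  - intros x Hx. now rewrite clamp_id.
Qed.

Lemma shooting_family_exists (P Q : R -> R) K al :
  (forall x, continuous P x) -> (forall x, continuous Q x) ->
  (forall x, Rabs (P x) <= K) -> (forall x, Rabs (Q x) <= K) ->
  exists Y U : R -> R -> R, forall lam, shooting P Q al lam (Y lam) (U lam).
Proof.
  intros HPc HQc HPb HQb.
  assert (Hsol : forall lam, {yu : (R -> R) * (R -> R) | shooting P Q al lam (fst yu) (snd yu)}).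
  { intros lam. apply constructive_indefinite_description.
    destruct (linear_ode_exists P (fun r => Q r + lam) 1 al (K + Rabs lam)) as [y [u [Hy0 [Hu0 Hd]]]].
    - exact HPc.
    - intros x. solve_continuous.
    - intros x. pose proof (HPb x). pose proof (Rabs_pos lam). lra.
    - intros x. pose proof (HQb x). pose proof (Rabs_triang (Q x) lam). lra.
    - now exists (y, u). }
  exists (fun lam => fst (proj1_sig (Hsol lam))), (fun lam => snd (proj1_sig (Hsol lam))).
  intros lam. exact (proj2_sig (Hsol lam)).
Qed.

Lemma eq_at_endpoint (F1 F2 : R -> R) a x0 : 0 < a -> (x0 = 0 \/ x0 = a) ->
  continuous F1 x0 -> continuous F2 x0 ->
  (forall x, 0 < x < a -> F1 x = F2 x) -> F1 x0 = F2 x0.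
Proof.
  intros Ha Hx0 H1 H2 Heq. apply continuous_eq_of_frequently_eq; auto.
  intros d Hd. pose proof (Rmin_l d a). pose proof (Rmin_r d a).
  assert (0 < Rmin d a) by (apply Rmin_glb_lt; lra).
  destruct Hx0 as [-> | ->].
  - exists (Rmin d a / 2). split; [rewrite Rminus_0_r, Rabs_pos_eq|apply Heq]; lra.
  - exists (a - Rmin d a / 2). split; [rewrite Rabs_left|apply Heq]; lra.
Qed.

Lemma continuous_fst_comp (h : R -> R) r th :
  continuous h r -> continuous (fun p : R * R => h (fst p)) (r, th).
Proof. intros H. apply (continuous_comp (fun p : R * R => fst p) h); [apply continuous_fst | exact H]. Qed.

Lemma is_eigenvalue_of_shooting (psi q P Q y u : R -> R) a alpha lam : 0 <= a ->
  (forall r, 0 < r < a -> P r = Derive psi r / psi r) -> (forall r, 0 < r < a -> Q r = q r) ->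
  (forall x, continuous P x) -> (forall x, continuous Q x) ->
  shooting P Q alpha lam y u -> u a + alpha * y a = 0 -> is_eigenvalue psi a alpha q lam.
Proof.
  intros Ha HP HQ HPc HQc [Hy0 [Hu0 Hd]] HB.
  set (ud := fun r => - P r * u r - (Q r + lam) * y r).
  set (phi := fun (r _ : R) => y r).
  assert (Hyc : forall x, continuous y x) by (intros x; apply (is_derive_continuous _ _ _ (proj1 (Hd x)))).
  assert (Huc : forall x, continuous u x) by (intros x; apply (is_derive_continuous _ _ _ (proj2 (Hd x)))).
  assert (Hudc : forall x, continuous ud x) by (intros x; unfold ud; solve_continuous).
  assert (E1 : d_r phi = fun r _ => u r).
  { do 2 (apply functional_extensionality; intro). unfold d_r, phi. apply is_derive_unique, Hd. }
  assert (E2 : d_th phi = fun _ _ => 0).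
  { do 2 (apply functional_extensionality; intro). unfold d_th, phi. apply Derive_const. }
  assert (E3 : d_r (d_r phi) = fun r _ => ud r).
  { rewrite E1. do 2 (apply functional_extensionality; intro). unfold d_r.
    apply is_derive_unique, Hd. }
  assert (Ezero : forall g : R -> R -> R, g = (fun _ _ => 0) ->
            d_r g = (fun _ _ => 0) /\ d_th g = (fun _ _ => 0)).
  { intros g ->. split; do 2 (apply functional_extensionality; intro);
      unfold d_r, d_th; apply Derive_const. }
  assert (E4 : d_th (d_r phi) = fun _ _ => 0).
  { rewrite E1. do 2 (apply functional_extensionality; intro). unfold d_th. apply Derive_const. }
  destruct (Ezero _ E2) as [E5 E6].
  exists phi. split; [|split; [|split; [|split; [|split]]]].
  - split.
    + intros r th. rewrite E1, E2. unfold phi.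
      repeat split; try apply ex_derive_const;
        [exists (u r) | exists (ud r)]; apply Hd.
    + intros r th _. rewrite E3, E4, E5, E6, E1, E2. unfold phi.
      repeat split; try apply continuous_const; apply continuous_fst_comp; auto.
  - reflexivity.
  - exists 0, 0. unfold phi. rewrite Hy0. split; lra.
  - intros r th Hr. unfold LB. rewrite E3, E6, E1. unfold phi, ud. rewrite HP, HQ by auto. ring.
  - intros th. rewrite E1. unfold phi. rewrite Hy0, Hu0. ring.
  - intros th. rewrite E1. exact HB.
Qed.

Lemma unstable_of_eigenvalue psi a alpha f v lam : lam < 0 ->
  is_eigenvalue psi a alpha (fun r => Derive f (v r)) lam -> unstable psi a alpha f v.
Proof.
  intros Hlam Heig. unfold unstable, lambda1.
  apply Rbar_le_lt_trans with (Finite lam); [|exact Hlam].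
  now apply Glb_Rbar_correct.
Qed.

Lemma radial_second_derivative_at_endpoint (psi f v : R -> R) a x0 : 0 < a -> (x0 = 0 \/ x0 = a) ->
  0 < psi x0 -> ex_derive psi x0 -> ex_derive (Derive psi) x0 -> ex_derive v x0 ->
  ex_derive (Derive v) x0 -> ex_derive f (v x0) -> continuous (Derive_n v 2) x0 ->
  (forall r, 0 < r < a -> Derive_n v 2 r + Derive psi r / psi r * Derive v r + f (v r) = 0) ->
  Derive_n v 2 x0 = - (Derive psi x0 / psi x0) * Derive v x0 - f (v x0).
Proof.
  intros Ha Hx0 Hpos Hpsi Hpsi' Hv Hv' Hf Hv2 Heq.
  apply (eq_at_endpoint _ (fun r => - (Derive psi r / psi r) * Derive v r - f (v r)) a); auto.
  - apply (ex_derive_continuous (V := R_NormedModule)).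
    auto_derive. repeat split; auto; lra.
  - intros r Hr. specialize (Heq r Hr). lra.
Qed.

Definition robin_boundary_term (psi v : R -> R) (a alpha : R) : R :=
  psi a * Derive v a * Derive_n v 2 a - psi 0 * Derive v 0 * Derive_n v 2 0
  + alpha * (psi a * Derive v a ^ 2 + psi 0 * Derive v 0 ^ 2).

Lemma robin_boundary_term_eq (psi f v : R -> R) a alpha :
  0 < psi a -> 0 < psi 0 ->
  Derive_n v 2 a = - (Derive psi a / psi a) * Derive v a - f (v a) ->
  Derive_n v 2 0 = - (Derive psi 0 / psi 0) * Derive v 0 - f (v 0) ->
  - Derive v 0 + alpha * v 0 = 0 -> Derive v a + alpha * v a = 0 ->
  2 * PI * robin_boundary_term psi v a alpha =
  2 * PI * psi a * (- (Derive psi a / psi a) * alpha ^ 2 * v a ^ 2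
                    + alpha * v a * f (v a) + alpha ^ 3 * v a ^ 2)
  + 2 * PI * psi 0 * (Derive psi 0 / psi 0 * alpha ^ 2 * v 0 ^ 2
                      + alpha * v 0 * f (v 0) + alpha ^ 3 * v 0 ^ 2).
Proof.
  intros Ha H0 Hva Hv0 Hbc0 Hbca. unfold robin_boundary_term. rewrite Hva, Hv0.
  replace (Derive v a) with (- alpha * v a) by lra.
  replace (Derive v 0) with (alpha * v 0) by lra.
  field. lra.
Qed.

Lemma shooting_robin_defect_neg (psi f v P Q y u : R -> R) a alpha lam M :
  0 < a -> lam <= 0 ->
  (forall x, 0 <= x <= a -> 0 < psi x) ->
  (forall x, 0 <= x <= a -> ex_derive psi x) ->
  (forall x, 0 <= x <= a -> ex_derive (Derive psi) x) ->
  (forall x, ex_derive f x) ->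
  (forall x, 0 <= x <= a -> ex_derive v x) ->
  (forall x, 0 <= x <= a -> ex_derive (Derive v) x) ->
  (forall x, 0 <= x <= a -> continuous (Derive_n v 2) x) ->
  (forall x, 0 < x < a -> Derive_n v 2 x + Derive psi x / psi x * Derive v x + f (v x) = 0) ->
  (forall x, 0 < x < a -> - Derive_n psi 2 x / psi x + (Derive psi x / psi x) ^ 2 >= 0) ->
  (forall x, 0 < x < a -> P x = Derive psi x / psi x) ->
  (forall x, 0 < x < a -> Q x = Derive f (v x)) ->
  (forall x, 0 <= x <= a -> psi x * Derive v x ^ 2 <= M) ->
  shooting P Q alpha lam y u -> (forall x, 0 <= x <= a -> 0 < y x) ->
  - lam * M * a < - robin_boundary_term psi v a alpha ->
  u a + alpha * y a < 0.
Proof.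
  intros Ha Hlam Hpos Hpsi Hpsi' Hf Hv Hv' Hv2 Heq Hcurv HP HQ HM [Hy0 [Hu0 Hd]] Hy Hlt.
  pose proof (picone_increment_le psi f v P Q y u a lam Hpos Hpsi Hpsi' Hf Hv Hv' Heq HP HQ
                (fun x => proj1 (Hd x)) (fun x => proj2 (Hd x)) Hy M ltac:(lra) Hlam Hcurv Hv2 HM)
    as Hpic.
  unfold picone_fn, robin_boundary_term in *. rewrite Hy0, Hu0, Rdiv_1_r in Hpic.
  change (Derive (Derive v) a) with (Derive_n v 2 a) in Hpic.
  change (Derive (Derive v) 0) with (Derive_n v 2 0) in Hpic.
  assert (Hya : 0 < y a) by (apply Hy; lra).
  set (t := u a / y a + alpha).
  assert (Hneg : psi a * Derive v a ^ 2 * t < 0) by (unfold t; nra).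
  assert (0 <= psi a * Derive v a ^ 2) by (pose proof (Hpos a ltac:(lra)); pose proof (pow2_ge_0 (Derive v a)); nra).
  assert (t < 0) by (destruct (Rle_or_lt 0 t); nra).
  replace (u a + alpha * y a) with (y a * t) by (unfold t; field; lra). nra.
Qed.

Lemma robin_boundary_term_neg (psi f v : R -> R) a alpha : 0 < a ->
  (forall x, 0 <= x <= a -> 0 < psi x) ->
  (forall x, 0 <= x <= a -> ex_derive psi x) ->
  (forall x, 0 <= x <= a -> ex_derive (Derive psi) x) ->
  (forall x, ex_derive f x) ->
  (forall x, 0 <= x <= a -> ex_derive v x) ->
  (forall x, 0 <= x <= a -> ex_derive (Derive v) x) ->
  (forall x, 0 <= x <= a -> continuous (Derive_n v 2) x) ->
  (forall x, 0 < x < a -> Derive_n v 2 x + Derive psi x / psi x * Derive v x + f (v x) = 0) ->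
  - Derive v 0 + alpha * v 0 = 0 -> Derive v a + alpha * v a = 0 ->
  2 * PI * psi a * (- (Derive psi a / psi a) * alpha ^ 2 * v a ^ 2
                    + alpha * v a * f (v a) + alpha ^ 3 * v a ^ 2)
  + 2 * PI * psi 0 * (Derive psi 0 / psi 0 * alpha ^ 2 * v 0 ^ 2
                      + alpha * v 0 * f (v 0) + alpha ^ 3 * v 0 ^ 2) < 0 ->
  robin_boundary_term psi v a alpha < 0.
Proof.
  intros Ha Hpos Hpsi Hpsi' Hf Hv Hv' Hv2 Heq Hbc0 Hbca Hineq.
  assert (Hend : forall x0, x0 = 0 \/ x0 = a ->
            Derive_n v 2 x0 = - (Derive psi x0 / psi x0) * Derive v x0 - f (v x0)).
  { intros x0 Hx0. assert (0 <= x0 <= a) by (destruct Hx0; subst; lra).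
    apply (radial_second_derivative_at_endpoint psi f v a); auto. }
  rewrite <- (robin_boundary_term_eq psi f v a alpha) in Hineq; auto; try (apply Hpos; lra).
  pose proof PI_RGT_0. nra.
Qed.

Lemma radial_coefficients_extension (psi f v : R -> R) a : 0 <= a ->
  (forall x, 0 <= x <= a -> 0 < psi x) ->
  (forall x, 0 <= x <= a -> ex_derive psi x) ->
  (forall x, 0 <= x <= a -> ex_derive (Derive psi) x) ->
  (forall x, continuous (Derive f) x) ->
  (forall x, 0 <= x <= a -> ex_derive v x) ->
  exists P Q K, (forall x, continuous P x) /\ (forall x, continuous Q x) /\
    (forall x, Rabs (P x) <= K) /\ (forall x, Rabs (Q x) <= K) /\
    (forall x, 0 <= x <= a -> P x = Derive psi x / psi x) /\
    (forall x, 0 <= x <= a -> Q x = Derive f (v x)).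
Proof.
  intros Ha Hpos Hpsi Hpsi' Hf Hv.
  assert (Hpc : forall x, 0 <= x <= a -> continuous (fun r => Derive psi r / psi r) x).
  { intros x Hx. pose proof (Hpos x Hx).
    apply continuity_pt_filterlim, continuity_pt_div; try lra;
      apply continuity_pt_filterlim, (ex_derive_continuous (V := R_NormedModule)); auto. }
  assert (Hqc : forall x, 0 <= x <= a -> continuous (fun r => Derive f (v r)) x).
  { intros x Hx. apply (continuous_comp v (Derive f)); auto.
    apply (ex_derive_continuous (V := R_NormedModule)); auto. }
  destruct (bounded_continuous_extension _ a Ha Hpc) as [P [KP [HPc [HPb HPe]]]].
  destruct (bounded_continuous_extension _ a Ha Hqc) as [Q [KQ [HQc [HQb HQe]]]].
  exists P, Q, (Rmax KP KQ). repeat split; auto.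
  - intros x. eapply Rle_trans; [apply HPb | apply Rmax_l].
  - intros x. eapply Rle_trans; [apply HQb | apply Rmax_r].
Qed.

Lemma psi_dv_sq_bounded (psi v : R -> R) a : 0 <= a ->
  (forall x, 0 <= x <= a -> 0 < psi x) ->
  (forall x, 0 <= x <= a -> ex_derive psi x) ->
  (forall x, 0 <= x <= a -> ex_derive (Derive v) x) ->
  exists M, 0 <= M /\ forall x, 0 <= x <= a -> psi x * Derive v x ^ 2 <= M.
Proof.
  intros Ha Hpos Hpsi Hv'.
  destruct (continuity_ab_maj (fun r => psi r * (Derive v r * Derive v r)) 0 a Ha)
    as [xM [HM HxM]].
  { intros x Hx. apply continuity_pt_filterlim.
    assert (continuous psi x) by (apply (ex_derive_continuous (V := R_NormedModule)), Hpsi, Hx).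
    assert (continuous (Derive v) x)
      by (apply (ex_derive_continuous (V := R_NormedModule)), Hv', Hx).
    change (continuous (fun r => psi r * (Derive v r * Derive v r)) x). solve_continuous. }
  exists (psi xM * (Derive v xM * Derive v xM)). split.
  - pose proof (Hpos xM HxM). nra.
  - intros x Hx. rewrite <- Rsqr_pow2. now apply HM.
Qed.

Lemma opp_div_mul_lt_opp (T M a : R) : T < 0 -> 0 <= M -> 0 < a ->
  - (T / (2 * (M + 1) * a)) * M * a < - T.
Proof.
  intros HT HM Ha.
  replace (- (T / (2 * (M + 1) * a)) * M * a) with (- T * (M / (2 * (M + 1)))) by (field; lra).
  assert (M / (2 * (M + 1)) < 1).
  { apply (Rmult_lt_reg_r (2 * (M + 1))); [lra|].
    unfold Rdiv. rewrite Rmult_assoc, Rinv_l by lra. lra. }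
  nra.
Qed.

Theorem unstable_of_robin_boundary_term_neg (psi f v : R -> R) a alpha : 0 < a ->
  (forall x, 0 <= x <= a -> 0 < psi x) ->
  (forall x, 0 <= x <= a -> ex_derive psi x) ->
  (forall x, 0 <= x <= a -> ex_derive (Derive psi) x) ->
  (forall x, ex_derive f x) -> (forall x, continuous (Derive f) x) ->
  (forall x, 0 <= x <= a -> ex_derive v x) ->
  (forall x, 0 <= x <= a -> ex_derive (Derive v) x) ->
  (forall x, 0 <= x <= a -> continuous (Derive_n v 2) x) ->
  (forall x, 0 < x < a -> Derive_n v 2 x + Derive psi x / psi x * Derive v x + f (v x) = 0) ->
  (forall x, 0 < x < a -> - Derive_n psi 2 x / psi x + (Derive psi x / psi x) ^ 2 >= 0) ->
  robin_boundary_term psi v a alpha < 0 -> unstable psi a alpha f v.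
Proof.
  intros Ha Hpos Hpsi Hpsi' Hf Hf' Hv Hv' Hv2 Heq Hcurv HT.
  destruct (radial_coefficients_extension psi f v a) as [P [Q [K [HPc [HQc [HPb [HQb [HPe HQe]]]]]]]];
    auto; try lra.
  destruct (shooting_family_exists P Q K alpha HPc HQc HPb HQb) as [Y [U HYU]].
  destruct (psi_dv_sq_bounded psi v a) as [M [HM0 HM]]; auto; try lra.
  set (lam0 := robin_boundary_term psi v a alpha / (2 * (M + 1) * a)).
  assert (Hlam0 : lam0 < 0) by (apply Rdiv_neg_pos; nra).
  destruct (shooting_robin_zero P Q K alpha HPb HQb a Y U Ha HYU lam0 Hlam0) as [lam [Hlam HB]].
  - intros Hy. unfold robin_defect. apply (shooting_robin_defect_neg psi f v P Q (Y lam0) (U lam0) a alpha lam0 M);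
      auto; try lra; try (intros; apply HPe || apply HQe; lra).
    now apply opp_div_mul_lt_opp.
  - apply (unstable_of_eigenvalue psi a alpha f v lam Hlam).
    apply (is_eigenvalue_of_shooting psi _ P Q (Y lam) (U lam) a alpha lam); auto; try lra;
      intros; [apply HPe | apply HQe]; lra.
Qed.

Theorem theorem5p2
  (psi chi f v : R -> R) (r1 r2 a alpha : R)
  (* r1 <= 0 < a <= r2 *)
  (Hr1 : r1 <= 0) (Ha : 0 < a) (Har2 : a <= r2)
  (* psi in C^2, psi > 0 on [r1,r2] *)
  (Hpsi_d : forall r, r1 <= r <= r2 -> ex_derive psi r)
  (Hpsi_dd : forall r, r1 <= r <= r2 -> ex_derive (Derive psi) r)
  (Hpsi_c2 : forall r, r1 <= r <= r2 -> continuous (Derive_n psi 2) r)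
  (Hpsi_pos : forall r, r1 <= r <= r2 -> 0 < psi r)
  (* chi differentiable, unit-speed (regular) curve *)
  (Hchi_d : forall r, r1 <= r <= r2 -> ex_derive chi r)
  (Hchi_c1 : forall r, r1 <= r <= r2 -> continuous (Derive chi) r)
  (Hunit : forall r, r1 <= r <= r2 -> (Derive psi r) ^ 2 + (Derive chi r) ^ 2 = 1)
  (* simple curve *)
  (Hsimple : forall s t, r1 <= s <= r2 -> r1 <= t <= r2 ->
       psi s = psi t -> chi s = chi t -> s = t)
  (Hchi0 : 0 < Derive chi 0) (Hchia : 0 < Derive chi a)
  (* f in C^1(R) *)
  (Hf_d : forall x, ex_derive f x)
  (Hf_c1 : forall x, continuous (Derive f) x)
  (* v = v(r) radial stationary solution, C^2 on [0,a] *)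
  (Hv_d : forall r, 0 <= r <= a -> ex_derive v r)
  (Hv_dd : forall r, 0 <= r <= a -> ex_derive (Derive v) r)
  (Hv_c2 : forall r, 0 <= r <= a -> continuous (Derive_n v 2) r)
  (Hv_eq : forall r, 0 < r < a ->
       Derive_n v 2 r + Derive psi r / psi r * Derive v r + f (v r) = 0)
  (Hv_bc0 : - Derive v 0 + alpha * v 0 = 0)
  (Hv_bca : Derive v a + alpha * v a = 0)
  (* -(psi'/psi)' >= 0 in (0,a) *)
  (Hcurv : forall r, 0 < r < a ->
       - (Derive_n psi 2 r) / psi r + (Derive psi r / psi r) ^ 2 >= 0)
  (Hineq :
     let L0 := 2 * PI * psi 0 in
     let La := 2 * PI * psi a in
     let Ha' := - (Derive psi a / psi a) in
     let H0 := Derive psi 0 / psi 0 in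
     La * (Ha' * alpha ^ 2 * v a ^ 2 + alpha * v a * f (v a) + alpha ^ 3 * v a ^ 2)
     + L0 * (H0 * alpha ^ 2 * v 0 ^ 2 + alpha * v 0 * f (v 0) + alpha ^ 3 * v 0 ^ 2)
     < 0) :
  unstable psi a alpha f v.
Proof.
  intros. cbv zeta in Hineq.
  assert (Hin : forall x, 0 <= x <= a -> r1 <= x <= r2) by (intros; lra).
  assert (Hpos : forall x, 0 <= x <= a -> 0 < psi x) by auto.
  assert (Hpsi : forall x, 0 <= x <= a -> ex_derive psi x) by auto.
  assert (Hpsi' : forall x, 0 <= x <= a -> ex_derive (Derive psi) x) by auto.
  apply unstable_of_robin_boundary_term_neg; auto.
  apply (robin_boundary_term_neg psi f v); auto.
Qed.
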